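(* Let $b\ge2$ be an integer and let $\gamma_0,\dots,\gamma_{b-1}$ be positive numbers, at least one greater than $1$ and at least one less than $1$. Let $X$ be the set of $x\in[0,1]$ such that $\sum_{n=1}^\infty\gamma_{x(1)}\gamma_{x(2)}\cdots\gamma_{x(n)}<+\infty$. Then the Hausdorff dimension (with respect to the Euclidean metric) of $X$ is $$\dim X=\min_{s\ge0}\frac{\log\left(\sum_{i=0}^{b-1}\gamma_i^{-s}\right)}{\log b}.$$
   Context: For $x\in[0,1]$, $x(j)$ is the $j$th digit of the $b$-ary expansion of $x$, where expansions with infinitely recurring digit $b-1$ are forbidden so that the expansion is unique. *)

From Stdlib Require Import Reals Lra Lia ZArith.
Open Scope R_scope.

(* j-th digit (j >= 1) of the b-ary expansion of x in [0,1], with recurring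
   digit b-1 forbidden: x(j) = floor(b^j x) mod b. (For x = 1 all digits are 0.) *)
Definition digit (b : nat) (x : R) (j : nat) : nat :=
  Z.to_nat (Z.modulo (Int_part (x * INR b ^ j)) (Z.of_nat b)).

Fixpoint gprod (b : nat) (g : nat -> R) (x : R) (n : nat) : R :=
  match n with
  | O => 1
  | S m => gprod b g x m * g (digit b x (S m))
  end.

Definition Xset (b : nat) (g : nat -> R) (x : R) : Prop :=
  0 <= x <= 1 /\
  exists l, Un_cv (fun N => sum_f_R0 (fun n => gprod b g x (S n)) N) l.

Definition dists (A : R -> Prop) (r : R) : Prop :=
  exists x y, A x /\ A y /\ r = Rabs (x - y).

Definition diam_le (A : R -> Prop) (delta : R) : Prop :=
  forall x y, A x -> A y -> Rabs (x - y) <= delta.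

(* set_cost s A c : c = (diam A)^s, with the conventions diam(empty)^s = 0
   and 0^0 = 1 for nonempty sets of diameter 0. *)
Definition set_cost (s : R) (A : R -> Prop) (c : R) : Prop :=
  ((~ exists x, A x) /\ c = 0) \/
  ((exists x, A x) /\ exists d, is_lub (dists A) d /\
     ((d = 0 /\ s = 0 /\ c = 1) \/ (d = 0 /\ s <> 0 /\ c = 0) \/
      (0 < d /\ c = Rpower d s))).

(* H^s(E) = 0 : for every delta > 0, H^s_delta(E) = 0, i.e. for every eps > 0
   there is a countable delta-cover (U n) of E with sum diam(U n)^s <= eps. *)
Definition Hnull (s : R) (E : R -> Prop) : Prop :=
  forall delta eps, 0 < delta -> 0 < eps ->
  exists (U : nat -> R -> Prop) (c : nat -> R),
    (forall x, E x -> exists n, U n x) /\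
    (forall n, diam_le (U n) delta /\ set_cost s (U n) (c n)) /\
    (forall N, sum_f_R0 c N <= eps).

Definition is_glb (P : R -> Prop) (m : R) : Prop :=
  (forall s, P s -> m <= s) /\ (forall m', (forall s, P s -> m' <= s) -> m' <= m).

Definition hausdorff_dim (E : R -> Prop) (d : R) : Prop :=
  is_glb (fun s => 0 <= s /\ Hnull s E) d.

Definition dimfun (b : nat) (g : nat -> R) (s : R) : R :=
  ln (sum_f_R0 (fun i => Rpower (g i) (- s)) (b - 1)) / ln (INR b).

(* Write [Q w] for the product of the [g] over the letters of a word [w] and
   [F s = ln (sum_i g_i^(-s))] for the pressure, so that the sum of [Q w ^ (-s)] over the
   words of length [n] is [exp (n F s)]; let [s0] be the last minimizer of [F] on [0, oo).

   Upper bound: a point of [X] has arbitrarily long prefixes [w] with [Q w <= 1]. Covering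
   [X] by the cells of such prefixes of length at least [n0] costs at most
   [sum_(n >= n0) (exp (F s0) b^(-t))^n], which is small when [t ln b > F s0].

   Lower bound: when [t ln b < F s0], a Chernoff-type splitting of the partition sum just to
   the right of [s0] (where [s0 F'(s0) = 0]) gives a length [m] and more than [b^(m t)]
   words of length [m] with [Q w <= th < 1]. The Cantor set of the points whose [m]-blocks
   are such words lies in [X], and its uniform mass gives each cell of size [b^(-m l)] mass
   at most [b^(-m l t)], so by the mass distribution principle its [H^t] measure is
   positive. *)

From Stdlib Require Import Reals Lra Lia ZArith List Classical ClassicalEpsilon FunctionalExtensionality.
Open Scope R_scope.
Import ListNotations.

Fixpoint rsum (f : nat -> R) (n : nat) : R :=
  match n with O => 0 | S p => rsum f p + f p end.

Lemma rsum_sum_f_R0 f N : sum_f_R0 f N = rsum f (S N).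
Proof. induction N as [|N IH]; simpl in *; [lra|]. rewrite IH. lra. Qed.

Lemma rsum_ext f h n : (forall k, (k < n)%nat -> f k = h k) -> rsum f n = rsum h n.
Proof.
  induction n as [|n IH]; intros H; simpl; [lra|].
  rewrite IH by (intros; apply H; lia). rewrite H by lia. reflexivity.
Qed.

Lemma rsum_le f h n : (forall k, (k < n)%nat -> f k <= h k) -> rsum f n <= rsum h n.
Proof.
  induction n as [|n IH]; intros H; simpl; [lra|].
  specialize (IH ltac:(intros; apply H; lia)). specialize (H n ltac:(lia)). lra.
Qed.

Lemma rsum_const c n : rsum (fun _ => c) n = INR n * c.
Proof. induction n as [|n IH]; simpl rsum; [simpl; ring|]. rewrite IH, S_INR. ring. Qed.

Lemma rsum_nonneg f n : (forall k, (k < n)%nat -> 0 <= f k) -> 0 <= rsum f n.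
Proof.
  intros H. rewrite <- (Rmult_0_r (INR n)), <- rsum_const. now apply rsum_le.
Qed.

Lemma rsum_plus f h n : rsum (fun k => f k + h k) n = rsum f n + rsum h n.
Proof. induction n; simpl; lra. Qed.

Lemma rsum_scal c f n : rsum (fun k => c * f k) n = c * rsum f n.
Proof. induction n as [|n IH]; simpl; [lra|]. rewrite IH. lra. Qed.

Lemma rsum_add f n p : rsum f (n + p) = rsum f n + rsum (fun r => f (n + r)%nat) p.
Proof.
  induction p as [|p IH]; simpl; [rewrite Nat.add_0_r; lra|].
  rewrite Nat.add_succ_r. simpl. rewrite IH. lra.
Qed.

Lemma rsum_mul f a c : rsum f (a * c) = rsum (fun q => rsum (fun r => f (q * c + r)%nat) c) a.
Proof.
  induction a as [|a IH]; simpl; [lra|].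
  replace (c + a * c)%nat with (a * c + c)%nat by lia. rewrite rsum_add, IH. reflexivity.
Qed.

Lemma rsum_S_l f N : rsum f (S N) = f O + rsum (fun i => f (S i)) N.
Proof. induction N as [|N IH]; [simpl; ring|]. simpl rsum in *. rewrite IH. ring. Qed.

Lemma rsum_mono f n p : (forall k, 0 <= f k) -> (n <= p)%nat -> rsum f n <= rsum f p.
Proof.
  intros H Hl. replace p with (n + (p - n))%nat by lia. rewrite rsum_add.
  pose proof (rsum_nonneg (fun r => f (n + r)%nat) (p - n) ltac:(intros; apply H)). lra.
Qed.

Lemma rsum_ge_term f n k : (forall j, (j < n)%nat -> 0 <= f j) -> (k < n)%nat -> f k <= rsum f n.
Proof.
  induction n as [|n IH]; intros H Hk; [lia|]. simpl.
  pose proof (rsum_nonneg f n ltac:(intros; apply H; lia)). pose proof (H n ltac:(lia)).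
  destruct (Nat.eq_dec k n) as [->|Hkn]; [lra|].
  pose proof (IH ltac:(intros; apply H; lia) ltac:(lia)). lra.
Qed.

Lemma rsum_geom_tail z n0 m : 0 <= z < 1 -> rsum (fun i => z ^ (n0 + i)) m <= z ^ n0 / (1 - z).
Proof.
  intros Hz. assert (E : rsum (fun i => z ^ (n0 + i)) m = z ^ n0 * (1 - z ^ m) / (1 - z)).
  { induction m as [|m IH]; simpl rsum; [field; lra|]. rewrite IH, pow_add. simpl. field. lra. }
  rewrite E. pose proof (pow_le z m ltac:(lra)). pose proof (pow_le z n0 ltac:(lra)).
  unfold Rdiv. apply Rmult_le_compat_r; [left; apply Rinv_0_lt_compat; lra | nra].
Qed.

Definition lsum (f : nat -> R) (l : list nat) : R := fold_right (fun w acc => f w + acc) 0 l.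

Lemma lsum_le f h l : (forall w, In w l -> f w <= h w) -> lsum f l <= lsum h l.
Proof.
  induction l as [|a l IH]; simpl; intros H; [lra|].
  pose proof (H a (or_introl eq_refl)). pose proof (IH (fun w h => H w (or_intror h))). lra.
Qed.

Lemma lsum_const c l : lsum (fun _ => c) l = INR (length l) * c.
Proof. induction l as [|a l IH]; simpl lsum; simpl length; [simpl; ring|]. rewrite IH, S_INR. ring. Qed.

Lemma lsum_nonneg f l : (forall w, In w l -> 0 <= f w) -> 0 <= lsum f l.
Proof. intros H. rewrite <- (Rmult_0_r (INR (length l))), <- lsum_const. now apply lsum_le. Qed.

Lemma lsum_plus f h l : lsum (fun w => f w + h w) l = lsum f l + lsum h l.
Proof. induction l as [|a l IH]; simpl; [ring|]. rewrite IH. ring. Qed.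

Lemma lsum_scal c f l : lsum (fun w => c * f w) l = c * lsum f l.
Proof. induction l as [|a l IH]; simpl; [ring|]. rewrite IH. ring. Qed.

Lemma lsum_ext f h l : (forall w, In w l -> f w = h w) -> lsum f l = lsum h l.
Proof.
  induction l as [|a l IH]; simpl; intros H; [reflexivity|].
  rewrite (H a (or_introl eq_refl)), (IH (fun w h => H w (or_intror h))). reflexivity.
Qed.

Lemma lsum_rsum (f : nat -> nat -> R) l N :
  lsum (fun w => rsum (f w) N) l = rsum (fun n => lsum (fun w => f w n) l) N.
Proof.
  induction N as [|N IH]; simpl.
  - induction l as [|a l IHl]; simpl; [reflexivity|]. rewrite IHl. ring.
  - rewrite <- IH. clear IH. induction l as [|a l IHl]; simpl; [ring|]. rewrite IHl. ring.
Qed.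

Lemma lsum_lt f h l : l <> [] -> (forall w, In w l -> h w < f w) -> lsum h l < lsum f l.
Proof.
  induction l as [|a [|a' l'] IH]; intros Hl H; [congruence| |].
  - pose proof (H a (or_introl eq_refl)). simpl. lra.
  - pose proof (H a (or_introl eq_refl)).
    assert (lsum h (a' :: l') < lsum f (a' :: l')) by (apply IH; [congruence|intros; apply H; simpl; auto]).
    simpl in *. lra.
Qed.

Lemma lsum_le_of_single_support f l c : NoDup l -> (forall w, In w l -> 0 <= f w <= c) ->
  (forall w1 w2, In w1 l -> In w2 l -> f w1 <> 0 -> f w2 <> 0 -> w1 = w2) -> 0 <= c ->
  lsum f l <= c.
Proof.
  induction l as [|a l IH]; intros Hnd Hb Hu Hc; simpl; [lra|].
  inversion Hnd as [|? ? Hal Hndl]; subst.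
  destruct (Req_dec (f a) 0) as [Ha|Ha].
  - rewrite Ha. assert (lsum f l <= c) by (apply IH; auto; intros; [apply Hb | apply Hu]; simpl; auto).
    lra.
  - assert (E : lsum f l <= lsum (fun _ => 0) l).
    { apply lsum_le. intros w Hw. destruct (Req_dec (f w) 0) as [->|Hw0]; [lra|].
      exfalso. assert (a = w) by (apply Hu; simpl; auto). subst; auto. }
    rewrite lsum_const, Rmult_0_r in E. pose proof (Hb a (or_introl eq_refl)). lra.
Qed.

(* The numbers [k < b ^ n] encode the words of length [n] over the alphabet
   [{0,..,b-1}], most significant digit first; [word_weight b g n k] is the
   product of the [g] of its letters. *)
Fixpoint word_weight (b : nat) (g : nat -> R) (n k : nat) : R :=
  match n with O => 1 | S p => word_weight b g p (k / b) * g (k mod b) end.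

Section WordWeight.
Variables (b : nat) (g : nat -> R).
Hypothesis (Hb : (1 < b)%nat) (Hg : forall i, (i < b)%nat -> 0 < g i).

Lemma word_weight_pos n k : 0 < word_weight b g n k.
Proof.
  revert k; induction n as [|n IH]; intros k; simpl; [lra|].
  apply Rmult_lt_0_compat; [apply IH | apply Hg, Nat.mod_upper_bound; lia].
Qed.

Lemma word_weight_split a c N :
  word_weight b g (c + a) N = word_weight b g a (N / b ^ c) * word_weight b g c (N mod b ^ c).
Proof.
  revert N; induction c as [|c IH]; intros N.
  - rewrite Nat.pow_0_r, Nat.div_1_r. simpl. lra.
  - change (b ^ S c)%nat with (b * b ^ c)%nat. cbn [Nat.add word_weight].
    rewrite IH, Nat.Div0.div_div.
    assert (E1 : ((N mod (b * b ^ c)) / b = (N / b) mod b ^ c)%nat).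
    { rewrite Nat.Div0.mod_mul_r, Nat.mul_comm, Nat.div_add by lia.
      rewrite Nat.div_small by (apply Nat.mod_upper_bound; lia). lia. }
    assert (E2 : ((N mod (b * b ^ c)) mod b = N mod b)%nat).
    { rewrite Nat.Div0.mod_mul_r, Nat.mul_comm, Nat.Div0.mod_add. apply Nat.Div0.mod_mod. }
    rewrite E1, E2. lra.
Qed.

Lemma word_weight_append a c K w : (w < b ^ c)%nat ->
  word_weight b g (c + a) (K * b ^ c + w) = word_weight b g a K * word_weight b g c w.
Proof.
  intros Hw. pose proof (Nat.pow_nonzero b c ltac:(lia)).
  rewrite word_weight_split, Nat.div_add_l, Nat.div_small, Nat.add_0_r by lia.
  rewrite Nat.add_comm, Nat.Div0.mod_add, Nat.mod_small by lia. reflexivity.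
Qed.

Lemma rsum_word_weight (phi : R -> R) n :
  (forall x y, 0 < x -> 0 < y -> phi (x * y) = phi x * phi y) -> phi 1 = 1 ->
  rsum (fun k => phi (word_weight b g n k)) (b ^ n) = (rsum (fun i => phi (g i)) b) ^ n.
Proof.
  intros Hm H1. induction n as [|n IH]; [simpl; lra|].
  rewrite Nat.pow_succ_r', (Nat.mul_comm b), rsum_mul. simpl pow. rewrite <- IH, <- rsum_scal.
  apply rsum_ext. intros q Hq. rewrite Rmult_comm, <- rsum_scal. apply rsum_ext. intros r Hr.
  cbn [word_weight].
  replace ((q * b + r) / b)%nat with q
    by (rewrite Nat.add_comm, Nat.div_add, Nat.div_small by lia; lia).
  replace ((q * b + r) mod b)%nat with r
    by (rewrite Nat.add_comm, Nat.Div0.mod_add, Nat.mod_small by lia; lia).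
  rewrite Hm; [lra | apply word_weight_pos | auto].
Qed.

Lemma word_weight_le_pow r N : word_weight b g r N <= (rsum g b + 1) ^ r.
Proof.
  revert N; induction r as [|r IH]; intros N; simpl; [lra|].
  assert (HN : (N mod b < b)%nat) by (apply Nat.mod_upper_bound; lia).
  pose proof (rsum_ge_term g b _ (fun i Hi => Rlt_le _ _ (Hg i Hi)) HN).
  pose proof (word_weight_pos r (N / b)). pose proof (Hg _ HN). specialize (IH (N / b)%nat).
  rewrite (Rmult_comm (rsum g b + 1)). apply Rmult_le_compat; lra.
Qed.

End WordWeight.

Lemma Int_part_unique r z : IZR z <= r -> r < IZR z + 1 -> Int_part r = z.
Proof.
  intros H1 H2. unfold Int_part. rewrite <- (tech_up r (z + 1)); [lia | |];
    rewrite plus_IZR; simpl; lra.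
Qed.

Lemma Int_part_nonneg r : 0 <= r -> (0 <= Int_part r)%Z.
Proof.
  intros H. destruct (base_Int_part r) as [H1 H2].
  destruct (Z_lt_le_dec (Int_part r) 0) as [Hn|]; [|auto].
  apply Z.lt_le_pred, IZR_le in Hn. simpl in Hn. lra.
Qed.

Lemma Int_part_close r1 r2 : Rabs (r1 - r2) < 1 -> (Z.abs (Int_part r1 - Int_part r2) <= 1)%Z.
Proof.
  intros H. apply Rabs_def2 in H.
  destruct (base_Int_part r1), (base_Int_part r2).
  assert (Hu : IZR (Int_part r1 - Int_part r2) < 2) by (rewrite minus_IZR; lra).
  assert (Hl : -2 < IZR (Int_part r1 - Int_part r2)) by (rewrite minus_IZR; lra).
  apply lt_IZR in Hu. apply lt_IZR in Hl. lia.
Qed.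

Lemma Int_part_mul_div y (b : nat) : 0 <= y -> (0 < b)%nat ->
  (Int_part (y * INR b) / Z.of_nat b = Int_part y)%Z.
Proof.
  intros Hy Hb. set (z := Int_part (y * INR b)).
  destruct (base_Int_part (y * INR b)) as [H1 H2]. fold z in H1, H2.
  assert (0 < INR b) by (apply lt_0_INR; lia).
  symmetry. apply Int_part_unique.
  - assert (Hq : (z / Z.of_nat b * Z.of_nat b <= z)%Z)
      by (pose proof (Z.mul_div_le z (Z.of_nat b)); lia).
    apply IZR_le in Hq. rewrite mult_IZR, <- INR_IZR_INZ in Hq. nra.
  - assert (Hq : (z + 1 <= (z / Z.of_nat b + 1) * Z.of_nat b)%Z).
    { pose proof (Z.mod_pos_bound z (Z.of_nat b) ltac:(lia)).
      pose proof (Z.div_mod z (Z.of_nat b) ltac:(lia)). lia. }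
    apply IZR_le in Hq. rewrite mult_IZR, !plus_IZR, <- INR_IZR_INZ in Hq. simpl in Hq. nra.
Qed.

(* [scaled_floor b x n] is the index of the [b]-adic cell of level [n] containing [x]. *)
Definition scaled_floor (b : nat) (x : R) (n : nat) : nat := Z.to_nat (Int_part (x * INR b ^ n)).

Section ScaledFloor.
Variables (b : nat) (x : R).
Hypothesis (Hb : (0 < b)%nat) (Hx : 0 <= x).

Let scaled_nonneg n : 0 <= x * INR b ^ n.
Proof. apply Rmult_le_pos; [auto | apply pow_le, pos_INR]. Qed.

Lemma Z_of_scaled_floor n : Z.of_nat (scaled_floor b x n) = Int_part (x * INR b ^ n).
Proof. unfold scaled_floor. rewrite Z2Nat.id; [auto | apply Int_part_nonneg, scaled_nonneg]. Qed.

Lemma scaled_floor_S n : (scaled_floor b x (S n) / b = scaled_floor b x n)%nat.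
Proof.
  apply Nat2Z.inj. rewrite Nat2Z.inj_div, !Z_of_scaled_floor.
  rewrite <- (Int_part_mul_div (x * INR b ^ n) b) by (auto using scaled_nonneg).
  f_equal. f_equal. simpl. ring.
Qed.

Lemma scaled_floor_add n r : (scaled_floor b x (n + r) / b ^ r = scaled_floor b x n)%nat.
Proof.
  induction r as [|r IH]; [rewrite Nat.add_0_r, Nat.pow_0_r, Nat.div_1_r; auto|].
  rewrite Nat.add_succ_r, Nat.pow_succ_r', <- Nat.Div0.div_div, scaled_floor_S. auto.
Qed.

Lemma digit_scaled_floor n : digit b x n = (scaled_floor b x n mod b)%nat.
Proof.
  unfold digit. apply Nat2Z.inj. rewrite Nat2Z.inj_mod, Z_of_scaled_floor.
  rewrite Z2Nat.id; [auto|]. apply Z.mod_pos_bound. lia.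
Qed.

Lemma scaled_floor_spec n :
  INR (scaled_floor b x n) <= x * INR b ^ n < INR (scaled_floor b x n) + 1.
Proof.
  rewrite INR_IZR_INZ, Z_of_scaled_floor. destruct (base_Int_part (x * INR b ^ n)). lra.
Qed.

Lemma scaled_floor_unique n (K : nat) :
  INR K <= x * INR b ^ n < INR K + 1 -> scaled_floor b x n = K.
Proof.
  intros [H1 H2]. apply Nat2Z.inj. rewrite Z_of_scaled_floor.
  apply Int_part_unique; rewrite <- INR_IZR_INZ; lra.
Qed.

End ScaledFloor.

Lemma gprod_word_weight b g x n : (1 < b)%nat -> 0 <= x ->
  gprod b g x n = word_weight b g n (scaled_floor b x n).
Proof.
  intros Hb Hx. induction n as [|n IH]; [reflexivity|].
  simpl gprod. cbn [word_weight].
  rewrite scaled_floor_S, IH, digit_scaled_floor by (auto; lia). reflexivity.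
Qed.

(** * The pressure function *)

Lemma ln_le x y : 0 < x -> x <= y -> ln x <= ln y.
Proof. intros Hx [Hxy | ->]; [left; apply ln_increasing |]; lra. Qed.

Lemma exp_le x y : x <= y -> exp x <= exp y.
Proof. intros [Hxy | ->]; [left; apply exp_increasing |]; lra. Qed.

Lemma continuity_pt_gt f c m : continuity_pt f c -> m < f c ->
  exists d, 0 < d /\ forall y, Rabs (y - c) < d -> m < f y.
Proof.
  intros Hc Hm. destruct (Hc (f c - m) ltac:(lra)) as [d [Hd H]]. exists d. split; [lra|].
  intros y Hy. destruct (Req_dec y c) as [->|Hyc]; [lra|].
  specialize (H y (conj (conj I (not_eq_sym Hyc)) Hy)). simpl in H. unfold R_dist in H.
  apply Rabs_def2 in H. lra.
Qed.

Section LastMinimizer.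
Variables (F : R -> R) (a : R).
Hypothesis (HF : forall s, continuity_pt F s) (Ha : 0 < a) (Hgrow : forall s, a * s <= F s).

Lemma halfline_minimizer : exists S mx, 0 <= mx <= S /\
  (forall s, 0 <= s -> F mx <= F s) /\ (forall s, S < s -> F mx < F s).
Proof.
  set (S := Rabs (F 0) / a + 1).
  assert (HS : 0 <= S).
  { unfold S, Rdiv. pose proof (Rabs_pos (F 0)). pose proof (Rinv_0_lt_compat a Ha). nra. }
  assert (Hbig : forall s, S < s -> F 0 < F s).
  { intros s Hs. apply Rmult_lt_compat_l with (r := a) in Hs; [|lra].
    replace (a * S) with (Rabs (F 0) + a) in Hs by (unfold S; field; lra).
    pose proof (Hgrow s). pose proof (Rle_abs (F 0)). lra. }
  destruct (continuity_ab_min F 0 S HS (fun c _ => HF c)) as [mx [Hmin Hmx]].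
  pose proof (Hmin 0 ltac:(lra)). exists S, mx. split; [lra|]. split.
  - intros s Hs. destruct (Rle_dec s S); [apply Hmin; lra|]. pose proof (Hbig s ltac:(lra)). lra.
  - intros s Hs. pose proof (Hbig s Hs). lra.
Qed.

Lemma last_minimizer : exists s0, 0 <= s0 /\
  (forall s, 0 <= s -> F s0 <= F s) /\ (forall s, s0 < s -> F s0 < F s).
Proof.
  destruct halfline_minimizer as (S & mx & Hmx & Hmin & Hbig).
  set (E := fun s => 0 <= s <= S /\ F s <= F mx).
  destruct (completeness E) as [s0 [Hub Hlub]].
  { exists S. intros x [Hx _]. lra. }
  { exists mx. split; [lra | apply Rle_refl]. }
  assert (Hs0 : mx <= s0 <= S)
    by (split; [apply Hub; split; [lra | apply Rle_refl] | apply Hlub; intros x [Hx _]; lra]).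
  assert (HFs0 : F s0 <= F mx).
  { apply Rnot_lt_le. intros Hlt.
    destruct (continuity_pt_gt F s0 (F mx) (HF s0) Hlt) as [d [Hd Hnear]].
    assert (s0 <= s0 - d / 2); [|lra].
    apply Hlub. intros x [Hx1 Hx2]. apply Rnot_lt_le. intros Hx.
    assert (x <= s0) by (apply Hub; split; auto).
    specialize (Hnear x ltac:(apply Rabs_def1; lra)). lra. }
  assert (Heq : F s0 = F mx) by (pose proof (Hmin s0 ltac:(lra)); lra).
  exists s0. split; [lra|]. split.
  - intros s Hs. rewrite Heq. auto.
  - intros s Hs. rewrite Heq. destruct (Rle_dec s S); [|apply Hbig; lra].
    apply Rnot_ge_lt. intros Hge.
    assert (s <= s0) by (apply Hub; split; [lra | apply Rge_le, Hge]). lra.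
Qed.

End LastMinimizer.

Definition partition_sum (b : nat) (g : nat -> R) (s : R) : R := rsum (fun i => exp (- s * ln (g i))) b.
Definition pressure (b : nat) (g : nat -> R) (s : R) : R := ln (partition_sum b g s).

Section Pressure.
Variables (b : nat) (g : nat -> R).
Hypothesis Hb : (0 < b)%nat.

Lemma partition_sum_pos s : 0 < partition_sum b g s.
Proof.
  unfold partition_sum. destruct b as [|b']; [lia|]. simpl.
  pose proof (rsum_nonneg (fun i => exp (- s * ln (g i))) b' ltac:(intros; left; apply exp_pos)).
  pose proof (exp_pos (- s * ln (g b'))). lra.
Qed.

Lemma pressure_ge_term s j : (j < b)%nat -> - s * ln (g j) <= pressure b g s.
Proof.
  intros Hj. unfold pressure. rewrite <- (ln_exp (- s * ln (g j))).
  apply ln_le; [apply exp_pos|].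
  apply (rsum_ge_term (fun i => exp (- s * ln (g i)))); [intros; left; apply exp_pos | auto].
Qed.

Lemma pressure_derivable s : exists l, derivable_pt_lim (pressure b g) s l.
Proof.
  assert (Hpart : forall b', exists l, derivable_pt_lim (partition_sum b' g) s l).
  { intros b'. induction b' as [|b' [l IH]]; [exists 0; apply derivable_pt_lim_const|].
    exists (l + - ln (g b') * exp (- s * ln (g b'))).
    apply (derivable_pt_lim_plus (partition_sum b' g) (fun s => exp (- s * ln (g b')))); [exact IH|].
    rewrite Rmult_comm. apply (derivable_pt_lim_comp (fun s => - s * ln (g b')) exp);
      [|apply derivable_pt_lim_exp].
    replace (- ln (g b')) with (- ln (g b') * 1) by ring.
    assert (Hfun : (fun s => - s * ln (g b')) = mult_real_fct (- ln (g b')) id)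
      by (apply functional_extensionality; intros;
          unfold mult_real_fct, id; ring).
    rewrite Hfun. apply derivable_pt_lim_scal, derivable_pt_lim_id. }
  destruct (Hpart b) as [l Hl]. eexists.
  apply (derivable_pt_lim_comp (partition_sum b g) ln); [exact Hl|].
  apply derivable_pt_lim_ln, partition_sum_pos.
Qed.

Lemma pressure_continuous s : continuity_pt (pressure b g) s.
Proof.
  destruct (pressure_derivable s) as [l Hl]. apply derivable_continuous_pt. exists l. exact Hl.
Qed.

(* Since some [g j < 1], the pressure grows at least linearly. *)
Lemma pressure_last_minimizer : (exists j, (j < b)%nat /\ 0 < g j < 1) ->
  exists s0, 0 <= s0 /\ (forall s, 0 <= s -> pressure b g s0 <= pressure b g s) /\
    (forall s, s0 < s -> pressure b g s0 < pressure b g s).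
Proof.
  intros [j [Hj Hgj]]. apply (last_minimizer (pressure b g) (- ln (g j))).
  - apply pressure_continuous.
  - pose proof (ln_increasing (g j) 1 ltac:(lra) ltac:(lra)) as Hln. rewrite ln_1 in Hln. lra.
  - intros s. pose proof (pressure_ge_term s j Hj). lra.
Qed.

End Pressure.

(** * Upper bound: covering by light cells *)

Lemma exp_mult_INR n y : exp (INR n * y) = exp y ^ n.
Proof.
  induction n as [|n IH]; [simpl; rewrite Rmult_0_l, exp_0; auto|].
  rewrite S_INR, Rmult_plus_distr_r, Rmult_1_l, exp_plus, IH. simpl. ring.
Qed.

Lemma pow_le_1 c n : 0 <= c <= 1 -> c ^ n <= 1.
Proof. intros Hc. induction n; simpl; [lra|]. pose proof (pow_le c n ltac:(lra)). nra. Qed.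

Lemma pow_antimono c n m : 0 <= c <= 1 -> (m <= n)%nat -> c ^ n <= c ^ m.
Proof.
  intros Hc Hmn. replace n with (m + (n - m))%nat by lia. rewrite pow_add.
  pose proof (pow_le c m ltac:(lra)). pose proof (pow_le_1 c (n - m) Hc). nra.
Qed.

Lemma pow_lt_1_small z e : 0 <= z < 1 -> 0 < e -> exists N, forall n, (N <= n)%nat -> z ^ n < e.
Proof.
  intros Hz He. destruct (pow_lt_1_zero z ltac:(rewrite Rabs_right; lra) e He) as [N HN].
  exists N. intros n Hn. specialize (HN n Hn). rewrite Rabs_right in HN; [lra|].
  apply Rle_ge, pow_le; lra.
Qed.

Lemma inv_INR_bounds b : (1 < b)%nat -> 0 < / INR b < 1.
Proof.
  intros Hb. assert (1 < INR b) by (apply lt_1_INR; lia).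
  split; [apply Rinv_0_lt_compat; lra|]. rewrite <- Rinv_1. apply Rinv_lt_contravar; lra.
Qed.

Lemma Rinv_pow_mul c n : 0 < c -> (/ c) ^ n * c ^ n = 1.
Proof. intros Hc. rewrite <- Rpow_mult_distr, Rinv_l by lra. apply pow1. Qed.

Lemma Rpower_inv_pow (B : nat) t l : (0 < B)%nat ->
  Rpower ((/ INR B) ^ l) t = exp (- (t * ln (INR B))) ^ l.
Proof.
  intros HB. assert (0 < INR B) by (apply lt_0_INR; lia). unfold Rpower.
  rewrite ln_pow, ln_Rinv, <- exp_mult_INR by (auto; apply Rinv_0_lt_compat; auto).
  f_equal. ring.
Qed.

(* Enumeration of the pairs [(n, k)] with [n0 <= n] and [k < len n], level by level. *)
Section CellEnumeration.
Variable len : nat -> nat.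
Hypothesis Hlen : forall n, (0 < len n)%nat.

Definition cell_next (p : nat * nat) : nat * nat :=
  let (n, k) := p in if Nat.ltb (S k) (len n) then (n, S k) else (S n, O).

Fixpoint cell_enum (n0 j : nat) : nat * nat :=
  match j with O => (n0, O) | S i => cell_next (cell_enum n0 i) end.

Lemma cell_enum_bound n0 j : let (n, k) := cell_enum n0 j in (n0 <= n)%nat /\ (k < len n)%nat.
Proof.
  induction j as [|j IH]; simpl; [split; [lia | apply Hlen]|].
  destruct (cell_enum n0 j) as [n k]. unfold cell_next.
  destruct (Nat.ltb_spec (S k) (len n)); [lia|]. split; [lia | apply Hlen].
Qed.

Lemma cell_enum_row n0 j n : cell_enum n0 j = (n, O) ->
  forall k, (k < len n)%nat -> cell_enum n0 (j + k) = (n, k).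
Proof.
  intros Hj. induction k as [|k IH]; intros Hk; [rewrite Nat.add_0_r; auto|].
  rewrite Nat.add_succ_r. simpl. rewrite IH by lia. unfold cell_next.
  destruct (Nat.ltb_spec (S k) (len n)); [reflexivity | lia].
Qed.

Lemma cell_enum_surj n0 n k : (n0 <= n)%nat -> (k < len n)%nat ->
  exists j, cell_enum n0 j = (n, k).
Proof.
  intros Hn Hk. assert (Hrow : exists j, cell_enum n0 j = (n, O)).
  { clear Hk. induction n as [|n IH].
    - replace n0 with O by lia. exists O. reflexivity.
    - destruct (Nat.eq_dec n0 (S n)) as [<-|]; [exists O; reflexivity|].
      destruct (IH ltac:(lia)) as [j Hj]. pose proof (Hlen n).
      exists (S (j + (len n - 1))). simpl. rewrite (cell_enum_row n0 j n Hj) by lia.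
      unfold cell_next. destruct (Nat.ltb_spec (S (len n - 1)) (len n)); [lia | reflexivity]. }
  destruct Hrow as [j Hj]. exists (j + k)%nat. apply cell_enum_row; auto.
Qed.

Lemma rsum_cell_enum n0 (h : nat -> nat -> R) j :
  let (n, k) := cell_enum n0 j in
  rsum (fun i => h (fst (cell_enum n0 i)) (snd (cell_enum n0 i))) (S j) =
  rsum (fun i => rsum (h (n0 + i)%nat) (len (n0 + i))) (n - n0) + rsum (h n) (S k).
Proof.
  induction j as [|j IH]; [simpl; rewrite Nat.sub_diag; simpl; ring|].
  pose proof (cell_enum_bound n0 j) as Hi.
  change (rsum (fun i => h (fst (cell_enum n0 i)) (snd (cell_enum n0 i))) (S (S j))) with
    (rsum (fun i => h (fst (cell_enum n0 i)) (snd (cell_enum n0 i))) (S j)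
     + h (fst (cell_next (cell_enum n0 j))) (snd (cell_next (cell_enum n0 j)))).
  change (cell_enum n0 (S j)) with (cell_next (cell_enum n0 j)).
  destruct (cell_enum n0 j) as [n k]. destruct Hi as [Hn Hk].
  rewrite IH. unfold cell_next.
  destruct (Nat.ltb_spec (S k) (len n)); [simpl; ring|]. simpl fst; simpl snd.
  replace (S n - n0)%nat with (S (n - n0)) by lia. simpl rsum.
  replace (n0 + (n - n0))%nat with n by lia. replace (len n) with (S k) by lia. simpl. ring.
Qed.

End CellEnumeration.

Lemma set_cost_empty s (U : R -> Prop) : (forall x, ~ U x) -> set_cost s U 0.
Proof. intros H. left. split; auto. intros [x Hx]. exact (H x Hx). Qed.

Lemma set_cost_interval s (U : R -> Prop) a d : 0 < d -> (forall x, U x <-> a <= x <= a + d) ->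
  set_cost s U (Rpower d s) /\ diam_le U d.
Proof.
  intros Hd HU.
  assert (Hdiam : diam_le U d)
    by (intros x y Hx Hy; apply HU in Hx, Hy; unfold Rabs; destruct Rcase_abs; lra).
  split; [|exact Hdiam].
  right. split; [exists a; apply HU; lra|]. exists d. split; [|right; right; auto].
  split.
  - intros r [x [y [Hx [Hy ->]]]]. auto.
  - intros m Hm. apply Hm. exists (a + d), a. repeat split; try apply HU; try lra.
    replace (a + d - a) with d by ring. rewrite Rabs_right; lra.
Qed.

Lemma set_cost_singleton s (U : R -> Prop) p : s <> 0 -> (forall x, U x <-> x = p) ->
  set_cost s U 0 /\ diam_le U 0.
Proof.
  intros Hs HU. assert (Hpp : Rabs (p - p) = 0) by (rewrite Rminus_diag, Rabs_R0; auto).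
  assert (Hdiam : diam_le U 0)
    by (intros x y Hx Hy; apply HU in Hx, Hy; subst; lra).
  split; [|exact Hdiam].
  right. split; [exists p; apply HU; auto|]. exists 0. split; [|right; left; auto].
  split.
  - intros r [x [y [Hx [Hy ->]]]]. auto.
  - intros m Hm. apply Hm. exists p, p. repeat split; try apply HU; auto.
Qed.

Lemma gprod_eventually_lt_1 b g x l :
  Un_cv (fun N => sum_f_R0 (fun n => gprod b g x (S n)) N) l ->
  forall n0, exists L, (n0 <= L)%nat /\ gprod b g x L < 1.
Proof.
  intros H n0. destruct (H (1/2) ltac:(lra)) as [N HN].
  exists (S (S (N + n0))). split; [lia|].
  pose proof (HN (N + n0)%nat ltac:(lia)) as H0. pose proof (HN (S (N + n0)) ltac:(lia)) as H1.
  unfold R_dist in *. cbn [sum_f_R0] in H1.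
  apply Rabs_def2 in H0. apply Rabs_def2 in H1. lra.
Qed.

Section UpperBound.
Variables (b : nat) (g : nat -> R).
Hypothesis (Hb : (1 < b)%nat) (Hg : forall i, (i < b)%nat -> 0 < g i).

Definition light_cell (n k : nat) (x : R) : Prop :=
  word_weight b g n k <= 1 /\
  INR k * (/ INR b) ^ n <= x <= INR k * (/ INR b) ^ n + (/ INR b) ^ n.

Definition light_cell_cost (t : R) (n k : nat) : R :=
  if Rle_dec (word_weight b g n k) 1 then Rpower ((/ INR b) ^ n) t else 0.

Lemma light_cell_cost_nonneg t n k : 0 <= light_cell_cost t n k.
Proof. unfold light_cell_cost. destruct Rle_dec; [left; apply exp_pos | lra]. Qed.

Lemma light_cell_cost_spec t n k : 0 <= t -> (/ INR b) ^ n <= 1 ->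
  set_cost t (light_cell n k) (light_cell_cost t n k) /\ diam_le (light_cell n k) ((/ INR b) ^ n).
Proof.
  intros Ht Hn. pose proof (inv_INR_bounds b Hb). unfold light_cell_cost.
  destruct (Rle_dec (word_weight b g n k) 1) as [Hw|Hw].
  - apply (set_cost_interval t (light_cell n k) (INR k * (/ INR b) ^ n)); [apply pow_lt; lra|].
    intros x. unfold light_cell. tauto.
  - split; [apply set_cost_empty; intros x Hx; apply Hw, Hx | intros x y Hx; exfalso; apply Hw, Hx].
Qed.

(* Light words are counted with weight [exp (-s ln Q) >= 1]. *)
Lemma rsum_light_cell_cost s t l : 0 <= s ->
  rsum (light_cell_cost t l) (b ^ l)%nat <= (partition_sum b g s * exp (- (t * ln (INR b)))) ^ l.
Proof.
  intros Hs. rewrite Rpow_mult_distr, <- (Rpower_inv_pow b t l) by lia.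
  assert (Hp : 0 < Rpower ((/ INR b) ^ l) t) by apply exp_pos.
  unfold partition_sum. rewrite <- (rsum_word_weight b g Hb Hg (fun x => exp (- s * ln x))).
  2:{ intros x y Hx Hy. rewrite ln_mult, <- exp_plus by auto. f_equal; ring. }
  2:{ rewrite ln_1, Rmult_0_r, exp_0. auto. }
  rewrite Rmult_comm, <- rsum_scal. apply rsum_le. intros k Hk. unfold light_cell_cost.
  pose proof (word_weight_pos b g Hb Hg l k).
  destruct (Rle_dec (word_weight b g l k) 1) as [Hw|Hw].
  - assert (1 <= exp (- s * ln (word_weight b g l k))); [|nra].
    rewrite <- exp_0. apply exp_le. pose proof (ln_le _ _ H Hw). rewrite ln_1 in H0. nra.
  - pose proof (exp_pos (- s * ln (word_weight b g l k))). nra.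
Qed.

Lemma Xset_in_light_cell x n0 : Xset b g x -> x < 1 ->
  exists L k, (n0 <= L)%nat /\ (k < b ^ L)%nat /\ light_cell L k x.
Proof.
  intros [Hx [l Hl]] Hx1. destruct (gprod_eventually_lt_1 b g x l Hl n0) as [L [HL HgL]].
  set (k := scaled_floor b x L). exists L, k.
  pose proof (scaled_floor_spec b x ltac:(lra) L) as Hk. fold k in Hk.
  assert (HbL : 0 < INR b ^ L) by (apply pow_lt, lt_0_INR; lia).
  pose proof (Rinv_pow_mul (INR b) L ltac:(apply lt_0_INR; lia)).
  assert (0 < (/ INR b) ^ L) by (apply pow_lt, Rinv_0_lt_compat, lt_0_INR; lia).
  split; [auto|]. split.
  - apply INR_lt. rewrite pow_INR. nra.
  - rewrite gprod_word_weight in HgL by (lia || lra). fold k in HgL. split; [lra | split; nra].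
Qed.

Lemma rsum_enum_light_cell_cost s t n0 N : 0 <= s ->
  let z := partition_sum b g s * exp (- (t * ln (INR b))) in z < 1 ->
  rsum (fun i => light_cell_cost t (fst (cell_enum (fun n => b ^ n)%nat n0 i))
                                   (snd (cell_enum (fun n => b ^ n)%nat n0 i))) N
  <= z ^ n0 / (1 - z).
Proof.
  intros Hs z Hz1.
  assert (Hz : 0 < z) by (apply Rmult_lt_0_compat; [apply partition_sum_pos; lia | apply exp_pos]).
  set (len := fun n => (b ^ n)%nat).
  assert (Hlen : forall n, (0 < len n)%nat) by (intros; apply Nat.neq_0_lt_0, Nat.pow_nonzero; lia).
  destruct N as [|N]; [simpl; apply Rlt_le, Rdiv_lt_0_compat; [apply pow_lt|]; lra|].
  pose proof (rsum_cell_enum len Hlen n0 (light_cell_cost t) N) as Hsum.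
  pose proof (cell_enum_bound len Hlen n0 N) as Hc.
  destruct (cell_enum len n0 N) as [n k]. destruct Hc as [Hn Hk].
  rewrite Hsum.
  assert (Hpart : rsum (light_cell_cost t n) (S k) <= rsum (light_cell_cost t n) (len n))
    by (apply rsum_mono; [intros; apply light_cell_cost_nonneg | auto]).
  assert (Hlevels : rsum (fun i => rsum (light_cell_cost t (n0 + i)%nat) (len (n0 + i)%nat)) (S (n - n0))
            <= rsum (fun i => z ^ (n0 + i)%nat) (S (n - n0)))
    by (apply rsum_le; intros; apply rsum_light_cell_cost; auto).
  pose proof (rsum_geom_tail z n0 (S (n - n0)) ltac:(lra)).
  simpl rsum in *. replace (n0 + (n - n0))%nat with n in * by lia. lra.
Qed.

(* Every [t] above the critical exponent gives a cover of [X] by light cells of arbitrarily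
   small size and total cost: the costs per level form a geometric series of ratio
   [partition_sum s * b^(-t) < 1]. *)
Lemma Hnull_Xset t s : 0 <= s -> 0 < t -> pressure b g s < t * ln (INR b) -> Hnull t (Xset b g).
Proof.
  intros Hs Ht0 Ht delta eps Hd He.
  pose proof (inv_INR_bounds b Hb) as Hib.
  set (z := partition_sum b g s * exp (- (t * ln (INR b)))).
  assert (Hz : 0 < z < 1).
  { unfold z. pose proof (partition_sum_pos b g ltac:(lia) s) as Hpos.
    rewrite <- (exp_ln (partition_sum b g s)), <- exp_plus by auto.
    split; [apply exp_pos|]. rewrite <- exp_0. apply exp_increasing. unfold pressure in Ht. lra. }
  destruct (pow_lt_1_small (/ INR b) delta ltac:(lra) Hd) as [N1 HN1].
  destruct (pow_lt_1_small z (eps * (1 - z)) ltac:(lra) ltac:(nra)) as [N2 HN2].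
  set (n0 := Nat.max N1 N2). set (len := fun n => (b ^ n)%nat).
  assert (Hlen : forall n, (0 < len n)%nat) by (intros; apply Nat.neq_0_lt_0, Nat.pow_nonzero; lia).
  set (cell := fun i => cell_enum len n0 i).
  (* The point [1] (all of whose digits are [0]) is covered on its own, at cost [0]. *)
  exists (fun j x => match j with O => x = 1 | S i => light_cell (fst (cell i)) (snd (cell i)) x end).
  exists (fun j => match j with O => 0 | S i => light_cell_cost t (fst (cell i)) (snd (cell i)) end).
  split; [|split].
  - intros x HxX. destruct (Req_dec x 1) as [Hx1|Hx1]; [exists O; auto|].
    destruct (Xset_in_light_cell x n0 HxX ltac:(destruct HxX; lra)) as (L & k & HL & Hk & Hc).
    destruct (cell_enum_surj len Hlen n0 L k HL Hk) as [j Hj].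
    exists (S j). unfold cell. rewrite Hj. exact Hc.
  - intros [|j].
    + destruct (set_cost_singleton t (fun x => x = 1) 1 ltac:(lra) ltac:(tauto)) as [H1 H2].
      split; [intros x y Hx Hy; specialize (H2 x y Hx Hy); lra | auto].
    + pose proof (cell_enum_bound len Hlen n0 j) as Hc. unfold cell.
      destruct (cell_enum len n0 j) as [n k]. simpl.
      assert (Hsmall : (/ INR b) ^ n <= delta).
      { pose proof (pow_antimono (/ INR b) n N1 ltac:(lra) ltac:(lia)). specialize (HN1 N1 (le_n _)). lra. }
      destruct (light_cell_cost_spec t n k ltac:(lra) ltac:(apply pow_le_1; lra)) as [Hcost Hdiam].
      split; [intros x y Hx Hy; specialize (Hdiam x y Hx Hy); lra | auto].
  - intros N. rewrite rsum_sum_f_R0, rsum_S_l.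
    pose proof (rsum_enum_light_cell_cost s t n0 N Hs ltac:(fold z; lra)) as Hsum. fold z in Hsum.
    assert (z ^ n0 < eps * (1 - z)) by (apply HN2; unfold n0; lia).
    assert (z ^ n0 / (1 - z) < eps)
      by (apply Rmult_lt_reg_r with (1 - z); [lra|]; unfold Rdiv; rewrite Rmult_assoc, Rinv_l; lra).
    unfold cell, len. lra.
Qed.

End UpperBound.

Fixpoint block_index (B : nat) (om : nat -> nat) (k : nat) : nat :=
  match k with O => O | S k' => (block_index B om k' * B + om k')%nat end.

Lemma scaled_floor_pow b m x k :
  scaled_floor b x (m * k) = scaled_floor (b ^ m) x k.
Proof. unfold scaled_floor. rewrite pow_INR, <- pow_mult. reflexivity. Qed.

Section BlockPoint.
Variables (B : nat) (om : nat -> nat).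
Hypothesis (HB : (2 <= B)%nat) (Hom : forall k, (om k + 2 <= B)%nat).

Let HBr : 2 <= INR B.
Proof. replace 2 with (INR 2) by (simpl; ring). apply le_INR. auto. Qed.

Let c := (INR B - 2) / (INR B - 1).

(* Digits at most [B-2] keep [x] at a fixed distance [1 - c] from the right end of each cell. *)
Lemma block_index_growth k i :
  INR (block_index B om (k + i)) + c <= (INR (block_index B om k) + c) * INR B ^ i.
Proof.
  induction i as [|i IH]; [rewrite Nat.add_0_r; simpl; lra|].
  rewrite Nat.add_succ_r. simpl block_index. rewrite plus_INR, mult_INR. simpl pow.
  assert (Hc : INR B - 2 + c <= c * INR B)
    by (unfold c; apply Rmult_le_reg_r with (INR B - 1); [lra|]; unfold Rdiv; field_simplify; lra).
  assert (Hd : INR (om (k + i)) <= INR B - 2)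
    by (pose proof (le_INR _ _ (Hom (k + i))) as H; rewrite plus_INR in H; simpl in H; lra).
  pose proof (pos_INR (block_index B om (k + i))). nra.
Qed.

Let HiB : 0 < / INR B < 1.
Proof. apply inv_INR_bounds. lia. Qed.

Lemma scaled_block_index_growing : Un_growing (fun k => INR (block_index B om k) * (/ INR B) ^ k).
Proof.
  intros k. simpl block_index. rewrite plus_INR, mult_INR. simpl pow.
  pose proof (pos_INR (om k)). pose proof (pow_lt (/ INR B) k ltac:(lra)).
  assert (0 <= INR (om k) * (/ INR B * (/ INR B) ^ k)) by (apply Rmult_le_pos; nra).
  replace ((INR (block_index B om k) * INR B + INR (om k)) * (/ INR B * (/ INR B) ^ k))
    with (INR (block_index B om k) * (/ INR B) ^ k + INR (om k) * (/ INR B * (/ INR B) ^ k))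
    by (field; lra).
  lra.
Qed.

Lemma scaled_block_index_le k j :
  INR (block_index B om j) * (/ INR B) ^ j <= (INR (block_index B om k) + c) * (/ INR B) ^ k.
Proof.
  assert (Hc : 0 <= c).
  { unfold c, Rdiv. apply Rmult_le_pos; [lra | left; apply Rinv_0_lt_compat; lra]. }
  assert (Hpk : forall k, 0 < (/ INR B) ^ k) by (intros; apply pow_lt; lra).
  destruct (le_lt_dec k j).
  - replace j with (k + (j - k))%nat by lia. rewrite pow_add.
    pose proof (block_index_growth k (j - k)) as Hgr.
    apply Rmult_le_compat_r with (r := (/ INR B) ^ (j - k)) in Hgr; [|left; auto].
    rewrite Rmult_assoc, (Rmult_comm (INR B ^ (j - k))), Rinv_pow_mul, Rmult_1_r in Hgr by lra.
    pose proof (Hpk k). pose proof (Hpk (j - k)%nat).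
    rewrite (Rmult_comm ((/ INR B) ^ k)), <- Rmult_assoc. apply Rmult_le_compat_r; nra.
  - apply Rle_trans with (INR (block_index B om k) * (/ INR B) ^ k).
    + apply Rge_le, (growing_prop _ k j scaled_block_index_growing). lia.
    + pose proof (Hpk k). nra.
Qed.

Lemma block_point : exists x, 0 <= x < 1 /\ forall k, scaled_floor B x k = block_index B om k.
Proof.
  assert (Hc : c < 1).
  { unfold c, Rdiv. apply Rmult_lt_reg_r with (INR B - 1); [lra|]. rewrite Rmult_assoc, Rinv_l; lra. }
  set (u := fun k => INR (block_index B om k) * (/ INR B) ^ k).
  assert (Hbd : has_ub u)
    by (exists (c * 1); intros y [i ->]; pose proof (scaled_block_index_le O i) as H;
        simpl in H; unfold u; lra).
  destruct (growing_cv u scaled_block_index_growing Hbd) as [x Hx].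
  assert (Hxl : forall k, u k <= x) by (intros; apply growing_ineq; [apply scaled_block_index_growing | auto]).
  assert (Hxu : forall k, x <= (INR (block_index B om k) + c) * (/ INR B) ^ k).
  { intros k. apply (Rle_cv_lim (Un := u) (Vn := fun _ => _) (scaled_block_index_le k) Hx).
    intros eps He. exists O. intros. unfold R_dist. rewrite Rminus_diag, Rabs_R0. auto. }
  assert (Hx0 : 0 <= x) by (specialize (Hxl O); unfold u in Hxl; simpl in Hxl; lra).
  exists x. split; [specialize (Hxu O); simpl in Hxu; lra|].
  intros k. apply scaled_floor_unique; [auto|].
  specialize (Hxl k). specialize (Hxu k). unfold u in Hxl.
  pose proof (Rinv_pow_mul (INR B) k ltac:(lra)) as Hpm.
  assert (0 < INR B ^ k) by (apply pow_lt; lra).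
  apply Rmult_le_compat_r with (r := INR B ^ k) in Hxl; [|lra].
  apply Rmult_le_compat_r with (r := INR B ^ k) in Hxu; [|lra].
  rewrite Rmult_assoc, Hpm, Rmult_1_r in Hxl, Hxu. lra.
Qed.

End BlockPoint.

Lemma series_cv_geometric_bound (a : nat -> R) C r : 0 <= r < 1 ->
  (forall n, 0 <= a n <= C * r ^ n) -> exists l, Un_cv (fun N => sum_f_R0 a N) l.
Proof.
  intros Hr Ha. assert (Hgrow : Un_growing (fun N => sum_f_R0 a N))
    by (intros N; simpl; pose proof (Ha (S N)); lra).
  assert (Hub : has_ub (fun N => sum_f_R0 a N)); [|destruct (growing_cv _ Hgrow Hub) as [l Hl]; eauto].
  exists (C / (1 - r)). intros y [N ->]. rewrite rsum_sum_f_R0.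
  apply Rle_trans with (rsum (fun i => C * r ^ (0 + i)) (S N)); [apply rsum_le; intros; apply Ha|].
  rewrite rsum_scal. pose proof (rsum_geom_tail r 0 (S N) Hr). simpl pow in *.
  assert (0 <= C) by (pose proof (Ha O); simpl in *; lra).
  replace (C / (1 - r)) with (C * (1 / (1 - r))) by (field; lra). apply Rmult_le_compat_l; auto.
Qed.

Section LightBlocks.
Variables (b : nat) (g : nat -> R) (m : nat) (th : R) (om : nat -> nat).
Hypothesis (Hb : (1 < b)%nat) (Hg : forall i, (i < b)%nat -> 0 < g i) (Hm : (0 < m)%nat)
  (Hth : 0 < th < 1) (Hlight : forall k, (om k < b ^ m)%nat /\ word_weight b g m (om k) <= th).

Lemma word_weight_block_index q : word_weight b g (m * q) (block_index (b ^ m) om q) <= th ^ q.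
Proof.
  induction q as [|q IH]; [rewrite Nat.mul_0_r; simpl; lra|].
  replace (m * S q)%nat with (m + m * q)%nat by lia. simpl block_index.
  destruct (Hlight q) as [Hq Hw]. rewrite word_weight_append by auto.
  pose proof (word_weight_pos b g Hb Hg (m * q) (block_index (b ^ m) om q)).
  pose proof (word_weight_pos b g Hb Hg m (om q)). simpl pow. nra.
Qed.

(* Along a point whose [m]-blocks are light words the products [gprod] decay geometrically
   with ratio [th ^ (1/m)]. *)
Lemma Xset_of_light_blocks x : 0 <= x <= 1 ->
  (forall k, scaled_floor b x (m * k) = block_index (b ^ m) om k) -> Xset b g x.
Proof.
  intros Hx HN. split; [auto|].
  set (G := rsum g b + 1). set (al := exp (ln th / INR m)).
  assert (HG : 1 <= G) by (pose proof (rsum_nonneg g b ltac:(intros; left; auto)); unfold G; lra).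
  assert (Hm' : 0 < INR m) by (apply lt_0_INR; auto).
  assert (Hlth : ln th < 0) by (rewrite <- ln_1; apply ln_increasing; lra).
  assert (Hal : 0 < al < 1).
  { unfold al. split; [apply exp_pos|]. rewrite <- exp_0. apply exp_increasing.
    unfold Rdiv. pose proof (Rinv_0_lt_compat _ Hm'). nra. }
  assert (Hthq : forall n q, (n < m * (q + 1))%nat -> th ^ q <= al ^ n / th).
  { intros n q Hn. unfold al. rewrite <- exp_mult_INR, <- (exp_ln th) at 1 by lra.
    rewrite <- exp_mult_INR. apply Rmult_le_reg_r with th; [lra|].
    unfold Rdiv. rewrite Rmult_assoc, Rinv_l, Rmult_1_r by lra.
    rewrite <- (exp_ln th) at 2 by lra. rewrite <- exp_plus. apply exp_le.
    apply lt_INR in Hn. rewrite mult_INR, plus_INR in Hn. simpl INR in Hn.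
    apply Rmult_le_reg_r with (INR m); [auto|]. field_simplify; [nra | lra]. }
  apply (series_cv_geometric_bound _ (G ^ m / th * al) al); [lra|]. intros n.
  rewrite gprod_word_weight by (lia || lra).
  pose proof (word_weight_pos b g Hb Hg (S n) (scaled_floor b x (S n))). split; [lra|].
  pose proof (Nat.div_mod (S n) m ltac:(lia)) as Hdm.
  set (q := (S n / m)%nat) in *. set (r := (S n mod m)%nat) in *.
  assert (Hr : (r < m)%nat) by (apply Nat.mod_upper_bound; lia).
  replace (word_weight b g (S n) (scaled_floor b x (S n)))
    with (word_weight b g (r + m * q) (scaled_floor b x (m * q + r)))
    by (rewrite (Nat.add_comm r), <- Hdm; reflexivity).
  rewrite word_weight_split, scaled_floor_add, HN by (lia || lra).
  pose proof (word_weight_block_index q).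
  pose proof (word_weight_le_pow b g Hb Hg r (scaled_floor b x (m * q + r) mod b ^ r)) as HwG.
  fold G in HwG.
  pose proof (Rle_pow G r m HG ltac:(lia)). pose proof (Hthq (S n) q ltac:(lia)).
  pose proof (word_weight_pos b g Hb Hg (m * q) (block_index (b ^ m) om q)).
  pose proof (word_weight_pos b g Hb Hg r (scaled_floor b x (m * q + r) mod b ^ r)).
  assert (0 <= G ^ m) by (apply pow_le; lra).
  replace (G ^ m / th * al * al ^ n) with ((al ^ S n / th) * G ^ m) by (simpl; field; lra).
  apply Rmult_le_compat; lra.
Qed.

End LightBlocks.

(** * Mass distribution on a Cantor set *)

(* Uniform random descent from a block: at each level the next base-[B] digit is drawn
   uniformly from [W]. *)
Section RandomDescent.
Variables (B : nat) (W : list nat).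
Hypothesis (HB : (0 < B)%nat) (HW : (0 < length W)%nat) (HWB : forall w, In w W -> (w < B)%nat).

(* Probability that the random descent of [r] levels from the block [K] ends at [z]. *)
Fixpoint descent_prob (r : nat) (z : Z) (K : nat) : R :=
  match r with
  | O => if Z.eq_dec (Z.of_nat K) z then 1 else 0
  | S r' => / INR (length W) * lsum (fun w => descent_prob r' z (K * B + w)) W
  end.

(* Probability that the random path through block [K] of level [k] passes through the
   block [z] of level [l] (for [l <= k] this is deterministic). *)
Definition hit_prob (l : nat) (z : Z) (k K : nat) : R :=
  if Nat.leb l k then (if Z.eq_dec (Z.of_nat (K / B ^ (k - l))) z then 1 else 0)
  else descent_prob (l - k) z K.

Definition near_hit_prob l z k K := hit_prob l (z - 1) k K + hit_prob l z k K + hit_prob l (z + 1) k K.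

(* Expected number of the sets labelled [(lv n, lz n)], [n < N], met by the random path. *)
Definition expected_hits (lv : nat -> nat) (lz : nat -> Z) (N k K : nat) : R :=
  rsum (fun n => near_hit_prob (lv n) (lz n) k K) N.

Let HWr : 0 < INR (length W).
Proof. apply lt_0_INR. auto. Qed.

Lemma descent_prob_nonneg r z K : 0 <= descent_prob r z K.
Proof.
  revert K; induction r as [|r IH]; intros K; simpl; [destruct Z.eq_dec; lra|].
  apply Rmult_le_pos; [left; apply Rinv_0_lt_compat; auto | apply lsum_nonneg; auto].
Qed.

Lemma near_hit_prob_nonneg l z k K : 0 <= near_hit_prob l z k K.
Proof.
  assert (H : forall z', 0 <= hit_prob l z' k K)
    by (intros; unfold hit_prob; destruct Nat.leb; [destruct Z.eq_dec; lra | apply descent_prob_nonneg]).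
  unfold near_hit_prob. pose proof (H (z - 1)%Z). pose proof (H z). pose proof (H (z + 1)%Z). lra.
Qed.

Lemma hit_prob_avg l z k K :
  hit_prob l z k K = / INR (length W) * lsum (fun w => hit_prob l z (S k) (K * B + w)) W.
Proof.
  unfold hit_prob. destruct (Nat.leb_spec l k).
  - destruct (Nat.leb_spec l (S k)); [|lia].
    rewrite (lsum_ext _ (fun _ => if Z.eq_dec (Z.of_nat (K / B ^ (k - l))) z then 1 else 0)).
    + rewrite lsum_const. field. lra.
    + intros w Hw. replace (S k - l)%nat with (S (k - l)) by lia.
      rewrite Nat.pow_succ_r', <- Nat.Div0.div_div, Nat.add_comm, Nat.div_add by lia.
      rewrite (Nat.div_small w B) by auto. reflexivity.
  - destruct (Nat.leb_spec l (S k)).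
    + replace l with (S k) by lia. rewrite Nat.sub_diag. replace (S k - k)%nat with 1%nat by lia.
      cbn [descent_prob]. f_equal. apply lsum_ext. intros w Hw. rewrite Nat.pow_0_r, Nat.div_1_r.
      reflexivity.
    + replace (l - k)%nat with (S (l - S k)) by lia. reflexivity.
Qed.

(* The expected number of hits is a martingale along the random path. *)
Lemma expected_hits_avg lv lz N k K :
  expected_hits lv lz N k K = / INR (length W) * lsum (fun w => expected_hits lv lz N (S k) (K * B + w)) W.
Proof.
  unfold expected_hits. rewrite (lsum_rsum (fun w n => near_hit_prob (lv n) (lz n) (S k) (K * B + w))).
  rewrite <- rsum_scal. apply rsum_ext. intros n _. unfold near_hit_prob.
  rewrite !(hit_prob_avg (lv n) _ k K), <- !lsum_scal, <- !lsum_plus.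
  apply lsum_ext. intros w _. ring.
Qed.

Lemma expected_hits_mono lv lz N N' k K : (N <= N')%nat ->
  expected_hits lv lz N k K <= expected_hits lv lz N' k K.
Proof. intros H. apply rsum_mono; auto. intros; apply near_hit_prob_nonneg. Qed.

Lemma descent_prob_bound r z K : NoDup W ->
  descent_prob r z K <= (/ INR (length W)) ^ r /\
  (descent_prob r z K <> 0 -> Z.of_nat K = (z / Z.of_nat (B ^ r))%Z).
Proof.
  intros Hnd. revert K; induction r as [|r IH]; intros K.
  - simpl. destruct Z.eq_dec; split; try lra; intros _. rewrite Z.div_1_r. auto.
  - cbn [descent_prob]. split.
    + simpl pow. apply Rmult_le_compat_l; [left; apply Rinv_0_lt_compat; auto|].
      apply lsum_le_of_single_support; auto.
      * intros w _. split; [apply descent_prob_nonneg | apply IH].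
      * intros w1 w2 H1 H2 F1 F2. apply (proj2 (IH _)) in F1. apply (proj2 (IH _)) in F2.
        rewrite <- F2 in F1. apply Nat2Z.inj in F1. pose proof (HWB w1 H1). pose proof (HWB w2 H2). nia.
      * apply pow_le. left; apply Rinv_0_lt_compat; auto.
    + intros Hnz. destruct (classic (exists w, In w W /\ descent_prob r z (K * B + w) <> 0))
        as [[w [Hw Hnz']]|Hall].
      * apply (proj2 (IH _)) in Hnz'. pose proof (HWB w Hw).
        assert (Hbr : (0 < B ^ r)%nat) by (apply Nat.neq_0_lt_0, Nat.pow_nonzero; lia).
        rewrite Nat.pow_succ_r', Nat2Z.inj_mul, Z.mul_comm, <- Z.div_div, <- Hnz' by lia.
        rewrite Nat2Z.inj_add, Nat2Z.inj_mul, Z.div_add_l, Z.div_small by lia. lia.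
      * exfalso. apply Hnz. rewrite (lsum_ext _ (fun _ => 0)); [rewrite lsum_const; ring|].
        intros w Hw. apply NNPP. intros Hw0. apply Hall. eauto.
Qed.

Lemma near_hit_prob_root l z : NoDup W -> near_hit_prob l z 0 0 <= 3 * (/ INR (length W)) ^ l.
Proof.
  intros Hnd. assert (H : forall z', hit_prob l z' 0 0 <= (/ INR (length W)) ^ l).
  { intros z'. unfold hit_prob. destruct (Nat.leb_spec l 0).
    - replace l with O by lia. simpl pow. destruct (Z.eq_dec _ _); lra.
    - rewrite Nat.sub_0_r. apply descent_prob_bound; auto. }
  unfold near_hit_prob. pose proof (H (z - 1)%Z). pose proof (H z). pose proof (H (z + 1)%Z). lra.
Qed.

Lemma expected_hits_root lv lz N (a : nat -> R) : NoDup W ->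
  (forall n, (/ INR (length W)) ^ lv n <= a n) -> expected_hits lv lz N 0 0 <= 3 * rsum a N.
Proof.
  intros Hnd Ha. rewrite <- rsum_scal. apply rsum_le. intros n _.
  pose proof (near_hit_prob_root (lv n) (lz n) Hnd). pose proof (Ha n). lra.
Qed.

Lemma exists_common_bound (Q : nat -> nat -> Prop) (l : list nat) :
  (forall w N N', (N <= N')%nat -> Q w N -> Q w N') ->
  (forall w, In w l -> exists N, Q w N) -> exists N, forall w, In w l -> Q w N.
Proof.
  intros Hm. induction l as [|a l IH]; intros H; [exists O; intros w []|].
  destruct (H a (or_introl eq_refl)) as [Na HNa].
  destruct IH as [N HN]; [intros w Hw; apply H; simpl; auto|].
  exists (Nat.max Na N). intros w [<-|Hw]; [apply Hm with Na | apply Hm with N]; auto; lia.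
Qed.

(* Since the bound is an average over the children, some child satisfies it too. *)
Lemma expected_hits_child lv lz k K sig : (forall N, expected_hits lv lz N k K <= sig) ->
  exists w, In w W /\ forall N, expected_hits lv lz N (S k) (K * B + w) <= sig.
Proof.
  intros H. apply NNPP. intros Hn.
  assert (H1 : forall w, In w W -> exists N, sig < expected_hits lv lz N (S k) (K * B + w)).
  { intros w Hw. apply NNPP. intros H2. apply Hn. exists w. split; auto.
    intros N. apply Rnot_lt_le. intros H3. apply H2. eauto. }
  destruct (exists_common_bound (fun w N => sig < expected_hits lv lz N (S k) (K * B + w)) W)
    as [N HN]; auto.
  { intros w N N' HNN' HQ. eapply Rlt_le_trans; [apply HQ | apply expected_hits_mono; auto]. }
  specialize (H N). rewrite expected_hits_avg in H.
  assert (Hlt : lsum (fun _ => sig) W < lsum (fun w => expected_hits lv lz N (S k) (K * B + w)) W)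
    by (apply lsum_lt; auto; destruct W; simpl in HW; [lia | congruence]).
  rewrite lsum_const in Hlt.
  apply Rmult_lt_compat_l with (r := / INR (length W)) in Hlt; [|apply Rinv_0_lt_compat; auto].
  replace (/ INR (length W) * (INR (length W) * sig)) with sig in Hlt by (field; lra). lra.
Qed.

Lemma path_of_children (P : nat -> nat -> Prop) : P O O ->
  (forall k K, P k K -> exists w, In w W /\ P (S k) (K * B + w)%nat) ->
  exists om, (forall k, In (om k) W) /\ forall k, P k (block_index B om k).
Proof.
  intros H0 Hstep.
  set (next := fun k K => epsilon (inhabits 0%nat) (fun w => In w W /\ P (S k) (K * B + w)%nat)).
  set (path := fix path k := match k with O => O | S k' => (path k' * B + next k' (path k'))%nat end).
  assert (Hpath : forall k, P k (path k) /\ In (next k (path k)) W /\ P (S k) (path (S k))).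
  { assert (Hnext : forall k K, P k K -> In (next k K) W /\ P (S k) (K * B + next k K)%nat)
      by (intros k K HP; apply (epsilon_spec (inhabits 0%nat)), Hstep, HP).
    induction k as [|k IH].
    - destruct (Hnext O O H0). auto.
    - destruct IH as (_ & _ & IH). destruct (Hnext _ _ IH). auto. }
  exists (fun k => next k (path k)). split; [intros; apply Hpath|].
  intros k. replace (block_index B (fun k => next k (path k)) k) with (path k); [apply Hpath|].
  induction k as [|k IH]; [reflexivity|]. simpl. rewrite <- IH. reflexivity.
Qed.

End RandomDescent.

Lemma near_hit_prob_self B W l z K : (Z.abs (Z.of_nat K - z) <= 1)%Z -> 1 <= near_hit_prob B W l z l K.
Proof.
  intros Hz. assert (H : forall z', 0 <= hit_prob B W l z' l K)
    by (intros; unfold hit_prob; rewrite Nat.leb_refl; destruct (Z.eq_dec _ _); lra).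
  unfold near_hit_prob. pose proof (H (z - 1)%Z). pose proof (H z). pose proof (H (z + 1)%Z).
  unfold hit_prob. rewrite Nat.leb_refl, Nat.sub_diag, Nat.pow_0_r, Nat.div_1_r.
  destruct (Z.eq_dec (Z.of_nat K) (z - 1)); destruct (Z.eq_dec (Z.of_nat K) z);
    destruct (Z.eq_dec (Z.of_nat K) (z + 1)); lra || lia.
Qed.

Lemma scaled_floor_near B y a d l : 0 <= y -> Rabs (y - a) <= d -> d * INR B ^ l < 1 ->
  (Z.abs (Z.of_nat (scaled_floor B y l) - Int_part (a * INR B ^ l)) <= 1)%Z.
Proof.
  intros Hy Hya Hl. rewrite Z_of_scaled_floor by auto. apply Int_part_close.
  assert (0 <= INR B ^ l) by (apply pow_le, pos_INR).
  replace (y * INR B ^ l - a * INR B ^ l) with ((y - a) * INR B ^ l) by ring.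
  rewrite Rabs_mult, (Rabs_right (INR B ^ l)) by lra. nra.
Qed.

Lemma exists_level_between d q : 0 < d < 1 -> 0 < q < 1 -> exists l, q ^ (S l) <= d < q ^ l.
Proof.
  intros Hd Hq. destruct (pow_lt_1_small q d ltac:(lra) ltac:(lra)) as [N HN].
  specialize (HN N (le_n _)). apply Rlt_le in HN. induction N as [|N IH]; [simpl in HN; lra|].
  destruct (Rlt_dec d (q ^ N)); [exists N; auto | apply IH; lra].
Qed.

Section CoverLabel.
Variables (B : nat) (M t : R).
Hypothesis (HB : (2 <= B)%nat) (HM : 2 <= M) (Ht : 0 <= t) (Hbeta : Rpower (INR B) t <= M).

Let HBr : 2 <= INR B.
Proof. replace 2 with (INR 2) by (simpl; ring). apply le_INR. auto. Qed.

(* A set of diameter [d] sits at the level [l] where [B^(-l-1) <= d < B^(-l)], and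
   [M^(-l) <= B^(-l t) = B^t (B^(-l-1))^t <= B^t d^t]. *)
Lemma level_of_diameter d : 0 < d < 1 ->
  exists l, (/ M) ^ l <= Rpower (INR B) t * Rpower d t /\ d * INR B ^ l < 1.
Proof.
  intros Hd. assert (HiB : 0 < / INR B < 1) by (apply inv_INR_bounds; lia).
  destruct (exists_level_between d (/ INR B) Hd HiB) as [l [Hl1 Hl2]]. exists l. split.
  - set (e := exp (- (t * ln (INR B)))).
    assert (Hbe : Rpower (INR B) t * e = 1)
      by (unfold e, Rpower; rewrite <- exp_plus, <- exp_0; f_equal; ring).
    assert (He : 0 < e) by apply exp_pos.
    assert (HMe : / M <= e).
    { replace e with (/ Rpower (INR B) t) by (field_simplify_eq; [lra | unfold Rpower; apply Rgt_not_eq, exp_pos]).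
      apply Rinv_le_contravar; [apply exp_pos | auto]. }
    assert (Hc : e ^ S l <= Rpower d t).
    { unfold e. rewrite <- (Rpower_inv_pow B t (S l)) by lia.
      apply Rle_Rpower_l; [auto | split; [apply pow_lt; lra | auto]]. }
    assert ((/ M) ^ l <= e ^ l) by (apply pow_incr; split; [left; apply Rinv_0_lt_compat; lra | auto]).
    assert (Rpower (INR B) t * e ^ S l = e ^ l) by (simpl; rewrite <- Rmult_assoc, Hbe; ring).
    assert (Rpower (INR B) t * e ^ S l <= Rpower (INR B) t * Rpower d t)
      by (apply Rmult_le_compat_l; [left; apply exp_pos | auto]).
    lra.
  - pose proof (Rinv_pow_mul (INR B) l ltac:(lra)). assert (0 < INR B ^ l) by (apply pow_lt; lra). nra.
Qed.

(* Each cover set gets a level [l] and a position [z]: it only meets level-[l] blocks adjacent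
   to [z], and [M^(-l)] is controlled by its cost up to an arbitrary slack [eps] (needed for
   sets of cost [0]). *)
Lemma cover_set_label U cn eps : 0 < eps -> diam_le U (1/2) -> set_cost t U cn ->
  exists p : nat * Z, (/ M) ^ fst p <= Rpower (INR B) t * cn + eps /\
    forall y, U y -> 0 <= y -> (Z.abs (Z.of_nat (scaled_floor B y (fst p)) - snd p) <= 1)%Z.
Proof.
  intros Heps Hdiam Hsc.
  assert (Hbeta0 : 0 < Rpower (INR B) t) by apply exp_pos.
  assert (HiM : 0 < / M < 1)
    by (split; [apply Rinv_0_lt_compat | rewrite <- Rinv_1; apply Rinv_lt_contravar]; lra).
  destruct (pow_lt_1_small (/ M) eps ltac:(lra) Heps) as [Le HLe]. specialize (HLe Le (le_n _)).
  destruct Hsc as [[Hne ->] | [[a Ha] [d [Hlub Hcases]]]].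
  - exists (Le, 0%Z). split; [simpl; lra|]. intros y Hy. exfalso. eauto.
  - assert (Hya : forall y, U y -> Rabs (y - a) <= d) by (intros y Hy; apply (proj1 Hlub); exists y, a; auto).
    assert (Hd12 : d <= 1/2)
      by (apply (proj2 Hlub); intros r [x [y [Hx [Hy ->]]]]; apply Hdiam; auto).
    assert (Hd0 : 0 <= d) by (pose proof (Hya a Ha); rewrite Rminus_diag, Rabs_R0 in *; auto).
    destruct Hcases as [(-> & -> & ->) | [(-> & _ & ->) | [Hd ->]]].
    + exists (0%nat, Int_part (a * INR B ^ 0)). split.
      * unfold Rpower. rewrite Rmult_0_l, exp_0. simpl. lra.
      * intros y Hy Hy0. apply (scaled_floor_near B y a 0); auto. simpl. lra.
    + exists (Le, Int_part (a * INR B ^ Le)). split; [simpl; lra|].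
      intros y Hy Hy0. apply (scaled_floor_near B y a 0); auto. lra.
    + destruct (level_of_diameter d ltac:(lra)) as [l [Hl1 Hl2]].
      exists (l, Int_part (a * INR B ^ l)). split; [simpl; lra|].
      intros y Hy Hy0. apply (scaled_floor_near B y a d); auto.
Qed.

End CoverLabel.

Lemma cheap_cover_labelling B (W : list nat) t (U : nat -> R -> Prop) (c : nat -> R) :
  (2 <= B)%nat -> NoDup W -> (2 <= length W)%nat -> (forall w, In w W -> (w < B)%nat) ->
  0 <= t -> Rpower (INR B) t <= INR (length W) ->
  (forall n, diam_le (U n) (1/2) /\ set_cost t (U n) (c n)) ->
  (forall N, sum_f_R0 c N <= / (12 * Rpower (INR B) t)) ->
  exists lv lz, (forall N, expected_hits B W lv lz N 0 0 <= 1/2) /\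
    forall n y, U n y -> 0 <= y -> (Z.abs (Z.of_nat (scaled_floor B y (lv n)) - lz n) <= 1)%Z.
Proof.
  intros HB2 Hnd HlW HWB Ht Hbeta Hsc Hsum.
  set (M := INR (length W)) in *. set (beta := Rpower (INR B) t) in *.
  assert (HM : 2 <= M) by (unfold M; replace 2 with (INR 2) by (simpl; ring); apply le_INR; auto).
  assert (Hbeta0 : 0 < beta) by apply exp_pos.
  destruct (choice (fun n (p : nat * Z) =>
      (/ M) ^ fst p <= beta * c n + (/ 2) ^ n / 24 /\
      forall y, U n y -> 0 <= y -> (Z.abs (Z.of_nat (scaled_floor B y (fst p)) - snd p) <= 1)%Z))
    as [lab Hlab].
  { intros n. destruct (Hsc n) as [Hd Hc].
    apply (cover_set_label B M t HB2 HM Ht Hbeta (U n) (c n)); auto.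
    apply Rdiv_lt_0_compat; [apply pow_lt|]; lra. }
  exists (fun n => fst (lab n)), (fun n => snd (lab n)). split; [|intros n; apply Hlab].
  intros N. eapply Rle_trans;
    [apply expected_hits_root with (a := fun n => beta * c n + (/ 2) ^ n / 24);
     try lia; auto; intros n; apply Hlab|].
  rewrite rsum_plus, rsum_scal.
  assert (Hc : rsum c N <= / (12 * beta))
    by (destruct N; [simpl; left; apply Rinv_0_lt_compat; lra | rewrite <- rsum_sum_f_R0; apply Hsum]).
  assert (Hbc : beta * rsum c N <= 1/12).
  { replace (1/12) with (beta * / (12 * beta)) by (field; lra). apply Rmult_le_compat_l; lra. }
  assert (rsum (fun n => (/ 2) ^ n / 24) N <= 1/12).
  { unfold Rdiv. rewrite (rsum_ext _ (fun n => / 24 * (/ 2) ^ (0 + n))) by (intros; simpl; ring).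
    rewrite rsum_scal. pose proof (rsum_geom_tail (/ 2) 0 N ltac:(lra)). simpl pow in *. lra. }
  lra.
Qed.

(* Frostman's mass distribution principle in combinatorial form: if the cover were cheap,
   some path of the Cantor set, i.e. some point of [X], would meet no cover set. *)
Lemma not_Hnull_of_light_words b g m (W : list nat) th t :
  (1 < b)%nat -> (forall i, (i < b)%nat -> 0 < g i) -> (0 < m)%nat -> 0 < th < 1 -> NoDup W ->
  (forall w, In w W -> (w + 2 <= b ^ m)%nat /\ word_weight b g m w <= th) ->
  (2 <= length W)%nat -> 0 <= t -> Rpower (INR (b ^ m)) t <= INR (length W) ->
  ~ Hnull t (Xset b g).
Proof.
  intros Hb Hg Hm Hth Hnd HW HlW Ht Hbeta Hnull.
  set (B := (b ^ m)%nat) in *.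
  assert (HB2 : (2 <= B)%nat).
  { unfold B. destruct m as [|m']; [lia|]. rewrite Nat.pow_succ_r'.
    pose proof (Nat.pow_nonzero b m' ltac:(lia)). nia. }
  assert (HWB : forall w, In w W -> (w < B)%nat) by (intros w Hw; specialize (HW w Hw); unfold B; lia).
  destruct (Hnull (1/2) (/ (12 * Rpower (INR B) t)) ltac:(lra)
    ltac:(apply Rinv_0_lt_compat, Rmult_lt_0_compat; [lra | apply exp_pos]))
    as (U & c & Hcov & Hsc & Hsum).
  destruct (cheap_cover_labelling B W t U c HB2 Hnd HlW HWB Ht Hbeta Hsc Hsum)
    as (lv & lz & Hroot & Hnear).
  destruct (path_of_children B W (fun k K => forall N, expected_hits B W lv lz N k K <= 1/2) Hroot)
    as [om [HomW Hpath]].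
  { intros k K HkK. apply expected_hits_child; auto; lia. }
  destruct (block_point B om HB2 (fun k => proj1 (HW _ (HomW k)))) as [x [Hx01 Hxfl]].
  assert (HxX : Xset b g x).
  { apply (Xset_of_light_blocks b g m th om Hb Hg Hm Hth); [|lra|].
    - intros k. destruct (HW _ (HomW k)). split; [fold B; lia | auto].
    - intros k. rewrite scaled_floor_pow. apply Hxfl. }
  destruct (Hcov x HxX) as [n Hn].
  specialize (Hnear n x Hn (proj1 Hx01)). rewrite Hxfl in Hnear.
  pose proof (near_hit_prob_self B W (lv n) (lz n) (block_index B om (lv n)) Hnear) as Hhit.
  pose proof (Hpath (lv n) (S n)) as Hbound. unfold expected_hits in Hbound.
  pose proof (rsum_ge_term (fun j => near_hit_prob B W (lv j) (lz j) (lv n) (block_index B om (lv n))) (S n) n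
    ltac:(intros; apply near_hit_prob_nonneg; lia) ltac:(lia)).
  cbv beta in *. lra.
Qed.

(** * Lower bound: many light words *)

Lemma derivable_pt_lim_interior_min (F : R -> R) c l : 0 < c -> derivable_pt_lim F c l ->
  (forall s, 0 <= s -> F c <= F s) -> l = 0.
Proof.
  intros Hc Hd Hmin. assert (pr : derivable_pt F c) by (exists l; exact Hd).
  pose proof (deriv_minimum F 0 (c + 1) c pr Hc ltac:(lra) ltac:(intros x Hx _; apply Hmin; lra)) as H0.
  rewrite <- H0. symmetry. apply derive_pt_eq_0. exact Hd.
Qed.

Section Tilting.
Variables (F : R -> R) (s0 l mu : R).
Hypothesis (Hs0 : 0 <= s0) (Hmu : 0 < mu) (Hd : derivable_pt_lim F s0 l) (Hl : s0 * l = 0)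
  (Hmin : forall s, 0 <= s -> F s0 <= F s).

(* [s0 * l = 0] says that either [s0 = 0] or [F'(s0) = 0]; in both cases [s0 F'(s0)]
   and [F(s0+h) - F(s0)] are small. *)
Lemma right_increment_small :
  exists h, 0 < h /\ (2 * s0 / h + 1) * (F (s0 + h) - F s0) < mu / 2.
Proof.
  set (e := mu / (8 * (s0 + 1))).
  assert (He : 0 < e) by (unfold e; apply Rdiv_lt_0_compat; lra).
  destruct (Hd e He) as [[dl Hdl] Hdd]. simpl in Hdd.
  assert (Hal : 0 < Rabs l + 1) by (pose proof (Rabs_pos l); lra).
  set (h := Rmin (dl / 2) (Rmin 1 (mu / (8 * (Rabs l + 1))))).
  assert (Hh0 : 0 < h) by (unfold h; repeat apply Rmin_glb_lt; try apply Rdiv_lt_0_compat; lra).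
  assert (Hh1 : h <= 1) by (unfold h; eapply Rle_trans; [apply Rmin_r | apply Rmin_l]).
  assert (Hh2 : h <= mu / (8 * (Rabs l + 1))) by (unfold h; eapply Rle_trans; [apply Rmin_r | apply Rmin_r]).
  assert (Hh3 : h <= dl / 2) by apply Rmin_l.
  specialize (Hdd h ltac:(lra) ltac:(rewrite Rabs_right; lra)).
  exists h. split; [auto|].
  set (D := F (s0 + h) - F s0) in *.
  apply Rabs_def2 in Hdd. destruct Hdd as [Hq1 _].
  assert (HD0 : 0 <= D) by (unfold D; pose proof (Hmin (s0 + h) ltac:(lra)); lra).
  assert (HDh : D < h * (l + e)).
  { apply Rmult_lt_compat_l with (r := h) in Hq1; [|lra].
    replace (h * (D / h - l)) with (D - h * l) in Hq1 by (field; lra). lra. }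
  assert (Hs0D : 2 * s0 * D / h <= 2 * s0 * e).
  { apply Rmult_le_reg_r with h; [auto|]. unfold Rdiv. rewrite Rmult_assoc, Rinv_l, Rmult_1_r by lra.
    replace (2 * s0 * e * h) with (2 * s0 * (h * (l + e)) - 2 * (s0 * l) * h) by ring. rewrite Hl. nra. }
  assert (Hhl : h * l <= mu / 8).
  { apply Rle_trans with (mu / (8 * (Rabs l + 1)) * Rabs l).
    - pose proof (Rle_abs l). pose proof (Rabs_pos l). nra.
    - apply Rmult_le_reg_r with (8 * (Rabs l + 1)); [lra|]. field_simplify; [|lra].
      pose proof (Rabs_pos l). nra. }
  assert (Hse : (2 * s0 + 1) * e <= mu / 4).
  { unfold e. apply Rmult_le_reg_r with (8 * (s0 + 1)); [lra|]. field_simplify; lra. }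
  replace ((2 * s0 / h + 1) * D) with (2 * s0 * D / h + D) by (field; lra). nra.
Qed.

Hypothesis Hstr : forall s, s0 < s -> F s0 < F s.

(* The parameters of a Chernoff-type splitting of the partition sum at the points
   [s0 < s < s2]: the slopes [lth < 0] and [lr] delimit the band of exponents that
   carries almost all of the mass at [s]. *)
Lemma tilting_parameters :
  exists s s2 lr lth, s0 < s < s2 /\ lth < 0 /\ F s0 - (s - s0) * lth < F s /\
    F s2 + (s2 - s) * lr < F s /\ F s0 - mu < F s + s * lr.
Proof.
  destruct right_increment_small as [h [Hh HE]].
  set (D := F (s0 + h) - F s0) in *.
  set (s := s0 + h / 2). set (s2 := s0 + h).
  assert (HFs : F s0 < F s) by (apply Hstr; unfold s; lra).
  assert (HFs2 : F s <= F s2 + (F s - F s0)) by (pose proof (Hmin s2 ltac:(unfold s2; lra)); lra).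
  set (sig := (F s2 - F s) / (s2 - s)).
  assert (Hsig : sig <= 2 * D / h).
  { replace sig with (2 * (F s2 - F s) * / h) by (unfold sig, s, s2; field; lra).
    unfold Rdiv. apply Rmult_le_compat_r; [left; apply Rinv_0_lt_compat; lra | unfold D, s2; lra]. }
  assert (Hss : s * sig <= (2 * s0 / h + 1) * D).
  { replace ((2 * s0 / h + 1) * D) with (s * (2 * D / h)) by (unfold s; field; lra).
    apply Rmult_le_compat_l; [unfold s; lra | auto]. }
  set (ka := mu / (4 * (s + 1))).
  assert (Hka : 0 < ka) by (unfold ka; apply Rdiv_lt_0_compat; unfold s; lra).
  assert (Hska : s * ka < mu / 4).
  { unfold ka. apply Rmult_lt_reg_r with (4 * (s + 1)); [unfold s; lra|]. field_simplify; unfold s; nra. }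
  exists s, s2, (- sig - ka), (- (F s - F s0) / h).
  split; [unfold s, s2; lra|]. split.
  { unfold Rdiv. pose proof (Rinv_0_lt_compat h Hh). nra. }
  split.
  { replace (F s0 - (s - s0) * (- (F s - F s0) / h)) with (F s0 + (F s - F s0) / 2)
      by (unfold s; field; lra). lra. }
  split.
  { replace (F s2 + (s2 - s) * (- sig - ka)) with (F s - (s2 - s) * ka)
      by (unfold sig; field; unfold s, s2; lra).
    assert (0 < (s2 - s) * ka) by (apply Rmult_lt_0_compat; unfold s, s2; lra). lra. }
  replace (F s + s * (- sig - ka)) with (F s - s * sig - s * ka) by ring. lra.
Qed.

End Tilting.

Definition in_band (lo hi x : R) : bool :=
  if Rle_dec lo x then (if Rle_dec x hi then true else false) else false.

Lemma in_band_spec lo hi x : in_band lo hi x = true -> lo <= x <= hi.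
Proof. unfold in_band. destruct (Rle_dec lo x), (Rle_dec x hi); easy. Qed.

(* Each term [exp (-s q)] of a partition sum is dominated by its value at [s0] (when [q] is
   above the band), at [s2] (when [q] is below it) or by [exp (-s lo)] (inside the band). *)
Lemma exp_band_split s s0 s2 lo hi q : 0 <= s0 <= s -> s <= s2 ->
  exp (- s * q) <= exp (- (s * lo)) * (if in_band lo hi q then 1 else 0)
    + exp (- s0 * q) * exp (- ((s - s0) * hi)) + exp (- s2 * q) * exp ((s2 - s) * lo).
Proof.
  intros Hs Hs2.
  pose proof (exp_pos (- (s * lo))). pose proof (exp_pos (- s0 * q + - ((s - s0) * hi))).
  pose proof (exp_pos (- s2 * q + (s2 - s) * lo)). rewrite <- !exp_plus.
  unfold in_band. destruct (Rle_dec lo q) as [h1|h1]; [destruct (Rle_dec q hi) as [h2|h2]|].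
  - assert (exp (- s * q) <= exp (- (s * lo))) by (apply exp_le; nra). lra.
  - assert (exp (- s * q) <= exp (- s0 * q + - ((s - s0) * hi))) by (apply exp_le; nra). lra.
  - assert (exp (- s * q) <= exp (- s2 * q + (s2 - s) * lo)) by (apply exp_le; nra). lra.
Qed.

Definition band_count (b : nat) (g : nat -> R) (m : nat) (lo hi : R) : R :=
  rsum (fun k => if in_band lo hi (ln (word_weight b g m k)) then 1 else 0) (b ^ m).

Lemma rsum_exp_word_weight b g m u : (1 < b)%nat -> (forall i, (i < b)%nat -> 0 < g i) ->
  rsum (fun k => exp (- u * ln (word_weight b g m k))) (b ^ m) = exp (INR m * pressure b g u).
Proof.
  intros Hb Hg. rewrite exp_mult_INR. unfold pressure. rewrite exp_ln by (apply partition_sum_pos; lia).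
  apply (rsum_word_weight b g Hb Hg (fun x => exp (- u * ln x))).
  - intros x y Hx Hy. rewrite ln_mult, <- exp_plus by auto. f_equal. ring.
  - rewrite ln_1, Rmult_0_r, exp_0. reflexivity.
Qed.

Lemma band_count_large b g m s0 s s2 lr lth t :
  (1 < b)%nat -> (forall i, (i < b)%nat -> 0 < g i) -> 0 <= s0 <= s -> s <= s2 ->
  let M := INR m in let F := pressure b g in
  M * (F s0 - (s - s0) * lth - F s) <= - ln 4 -> M * (F s2 + (s2 - s) * lr - F s) <= - ln 4 ->
  ln 6 <= M * (F s + s * lr - t * ln (INR b)) ->
  3 * exp (M * (t * ln (INR b))) <= band_count b g m (M * lr) (M * lth).
Proof.
  intros Hb Hg Hs Hs2 M F Ha1 Ha2 Ha0.
  set (N := band_count b g m (M * lr) (M * lth)).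
  assert (Hsplit : exp (M * F s) <= exp (- (s * (M * lr))) * N
      + exp (- ((s - s0) * (M * lth))) * exp (M * F s0) + exp ((s2 - s) * (M * lr)) * exp (M * F s2)).
  { unfold F, M. rewrite <- !rsum_exp_word_weight by auto. unfold N, band_count.
    rewrite <- !rsum_scal, <- !rsum_plus. apply rsum_le. intros k _.
    eapply Rle_trans; [apply (exp_band_split s s0 s2 (M * lr) (M * lth)); auto | right; unfold M; ring]. }
  set (X := exp (M * F s)).
  assert (E1 : exp (- ((s - s0) * (M * lth))) * exp (M * F s0) = X * exp (M * (F s0 - (s - s0) * lth - F s)))
    by (unfold X; rewrite <- !exp_plus; f_equal; ring).
  assert (E2 : exp ((s2 - s) * (M * lr)) * exp (M * F s2) = X * exp (M * (F s2 + (s2 - s) * lr - F s)))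
    by (unfold X; rewrite <- !exp_plus; f_equal; ring).
  assert (E3 : X = exp (- (s * (M * lr))) * (exp (M * (t * ln (INR b))) * exp (M * (F s + s * lr - t * ln (INR b)))))
    by (unfold X; rewrite <- !exp_plus; f_equal; ring).
  assert (Hq : forall a, a <= - ln 4 -> exp a <= / 4)
    by (intros a Ha; rewrite <- (exp_ln (/ 4)), ln_Rinv by lra; apply exp_le; lra).
  assert (H6 : 6 <= exp (M * (F s + s * lr - t * ln (INR b))))
    by (rewrite <- (exp_ln 6) by lra; apply exp_le; lra).
  rewrite E1, E2 in Hsplit. change (exp (M * F s)) with X in Hsplit. pose proof (Hq _ Ha1) as Hq1. pose proof (Hq _ Ha2) as Hq2.
  assert (HX : 0 < X) by apply exp_pos.
  apply Rmult_le_compat_l with (r := X) in Hq1, Hq2; try lra.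
  set (E := exp (- (s * (M * lr)))) in *. set (Y := exp (M * (t * ln (INR b)))) in *.
  set (Z := exp (M * (F s + s * lr - t * ln (INR b)))) in *.
  assert (HE : 0 < E) by apply exp_pos. assert (HY : 0 < Y) by apply exp_pos.
  assert (HEN : E * (Y * Z / 2) <= E * N) by (rewrite E3 in Hsplit, Hq1, Hq2; lra).
  apply Rmult_le_reg_l in HEN; [nra | auto].
Qed.

Lemma length_filter_seq (p : nat -> bool) n :
  INR (length (filter p (seq 0 n))) = rsum (fun k => if p k then 1 else 0) n.
Proof.
  induction n as [|n IH]; [reflexivity|].
  rewrite seq_S, filter_app, length_app, plus_INR, IH. simpl. destruct (p n); simpl; ring.
Qed.

(* The last digit [B-1] is excluded so that the Cantor points stay away from cell ends. *)
Lemma word_list_of_pred (p : nat -> bool) B : (0 < B)%nat ->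
  exists W, NoDup W /\ (forall w, In w W -> (w + 2 <= B)%nat /\ p w = true) /\
    rsum (fun k => if p k then 1 else 0) B - 1 <= INR (length W).
Proof.
  intros HB. set (q := fun k => (p k && negb (Nat.eqb k (B - 1)))%bool).
  exists (filter q (seq 0 B)). split; [apply NoDup_filter, seq_NoDup|]. split.
  - intros w Hw. apply filter_In in Hw. destruct Hw as [Hw1 Hw2]. apply in_seq in Hw1.
    unfold q in Hw2. apply andb_prop in Hw2. destruct Hw2 as [Hp Hlast].
    apply Bool.negb_true_iff, Nat.eqb_neq in Hlast. split; [lia | auto].
  - rewrite length_filter_seq.
    assert (Hlast : forall n, rsum (fun k => if Nat.eqb k n then 1 else 0) (S n) <= 1).
    { intros n. simpl rsum. rewrite Nat.eqb_refl, (rsum_ext _ (fun _ => 0)), rsum_const; [lra|].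
      intros k Hk. destruct (Nat.eqb_spec k n); [lia | reflexivity]. }
    specialize (Hlast (B - 1)%nat). replace (S (B - 1)) with B in Hlast by lia.
    assert (rsum (fun k => if p k then 1 else 0) B
            <= rsum (fun k => if q k then 1 else 0) B + rsum (fun k => if Nat.eqb k (B - 1) then 1 else 0) B)
      by (rewrite <- rsum_plus; apply rsum_le; intros k _; unfold q;
          destruct (p k), (Nat.eqb k (B - 1)); simpl; lra).
    lra.
Qed.

Lemma exists_nat_mul_ge a c : 0 < a -> exists N, forall m, (N <= m)%nat -> c <= INR m * a.
Proof.
  intros Ha. destruct (INR_unbounded (c / a)) as [N HN]. exists N. intros m Hm.
  apply le_INR in Hm. apply Rmult_le_reg_r with (/ a); [apply Rinv_0_lt_compat; auto|].
  rewrite Rmult_assoc, Rinv_r, Rmult_1_r by lra. unfold Rdiv in HN. lra.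
Qed.

Section LowerBound.
Variables (b : nat) (g : nat -> R) (s0 : R).
Hypothesis (Hb : (1 < b)%nat) (Hg : forall i, (i < b)%nat -> 0 < g i) (Hs0 : 0 <= s0)
  (Hmin : forall s, 0 <= s -> pressure b g s0 <= pressure b g s)
  (Hstr : forall s, s0 < s -> pressure b g s0 < pressure b g s).

Lemma many_light_words t : 0 <= t -> t * ln (INR b) < pressure b g s0 ->
  exists m W th, (0 < m)%nat /\ 0 < th < 1 /\ NoDup W /\
    (forall w, In w W -> (w + 2 <= b ^ m)%nat /\ word_weight b g m w <= th) /\
    (2 <= length W)%nat /\ Rpower (INR (b ^ m)) t <= INR (length W).
Proof.
  intros Ht Hlt. set (F := pressure b g) in *. set (lb := ln (INR b)) in *.
  assert (Hlb : 0 < lb) by (rewrite <- ln_1; apply ln_increasing; [lra | apply lt_1_INR; lia]).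
  destruct (pressure_derivable b g ltac:(lia) s0) as [l Hl].
  assert (Hsl : s0 * l = 0).
  { destruct (Req_dec s0 0) as [->|Hs0']; [ring|].
    rewrite (derivable_pt_lim_interior_min F s0 l); [ring | lra | auto | auto]. }
  destruct (tilting_parameters F s0 l (F s0 - t * lb) Hs0 ltac:(lra) Hl Hsl Hmin Hstr)
    as (s & s2 & lr & lth & Hss & Hlth & Hi & Hii & Hiii).
  destruct (exists_nat_mul_ge (- (F s0 - (s - s0) * lth - F s)) (ln 4) ltac:(lra)) as [N1 HN1].
  destruct (exists_nat_mul_ge (- (F s2 + (s2 - s) * lr - F s)) (ln 4) ltac:(lra)) as [N2 HN2].
  destruct (exists_nat_mul_ge (F s + s * lr - t * lb) (ln 6) ltac:(lra)) as [N3 HN3].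
  set (m := S (Nat.max N1 (Nat.max N2 N3))).
  specialize (HN1 m ltac:(unfold m; lia)). specialize (HN2 m ltac:(unfold m; lia)).
  specialize (HN3 m ltac:(unfold m; lia)). set (M := INR m) in *.
  pose proof (band_count_large b g m s0 s s2 lr lth t Hb Hg ltac:(lra) ltac:(lra)
    ltac:(fold M F; lra) ltac:(fold M F; lra) ltac:(fold M F lb; lra)) as Hcount.
  fold M lb in Hcount.
  destruct (word_list_of_pred (fun k => in_band (M * lr) (M * lth) (ln (word_weight b g m k))) (b ^ m)
    ltac:(apply Nat.neq_0_lt_0, Nat.pow_nonzero; lia)) as (W & HWnd & HW & HWlen).
  fold (band_count b g m (M * lr) (M * lth)) in HWlen.
  assert (HY : 1 <= exp (M * (t * lb)))
    by (rewrite <- exp_0; apply exp_le; apply Rmult_le_pos; [apply pos_INR | nra]).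
  assert (HM : 0 < M) by (apply lt_0_INR; unfold m; lia).
  exists m, W, (exp (M * lth)). split; [unfold m; lia|]. split.
  { split; [apply exp_pos|]. rewrite <- exp_0. apply exp_increasing. nra. }
  split; [auto|]. split; [|split].
  - intros w Hw. destruct (HW w Hw) as [Hw2 Hband]. apply in_band_spec in Hband.
    split; [auto|]. rewrite <- (exp_ln (word_weight b g m w)) by (apply word_weight_pos; auto).
    apply exp_le. lra.
  - apply INR_le. simpl INR. lra.
  - unfold Rpower. rewrite pow_INR, ln_pow by (apply lt_0_INR; lia).
    fold M lb. replace (t * (M * lb)) with (M * (t * lb)) by ring. lra.
Qed.

End LowerBound.

Lemma hausdorff_dim_of_threshold (E : R -> Prop) D c : 0 <= D -> 0 < c ->
  (forall t, D < t * c -> Hnull t E) -> (forall t, 0 <= t -> t * c < D -> ~ Hnull t E) ->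
  hausdorff_dim E (D / c).
Proof.
  intros HD Hc Habove Hbelow.
  assert (Hscale : forall t, (t * c < D <-> t < D / c) /\ (D < t * c <-> D / c < t)).
  { intros t. assert (Hcc : D / c * c = D) by (field; lra).
    split; split; intros H; solve [nra | apply Rmult_lt_reg_r with c; lra]. }
  assert (HDc : 0 <= D / c) by (unfold Rdiv; pose proof (Rinv_0_lt_compat c Hc); nra).
  split.
  - intros t [Ht Hnull]. apply Rnot_lt_le. intros Htd.
    exact (Hbelow t Ht (proj2 (proj1 (Hscale t)) Htd) Hnull).
  - intros m' Hm'. apply Rnot_lt_le. intros HDm.
    assert (Hmid : m' <= (D / c + m') / 2); [|lra].
    apply Hm'. split; [lra|]. apply Habove, (proj2 (proj2 (Hscale _))). lra.
Qed.

Lemma dimfun_pressure b g s : (0 < b)%nat -> dimfun b g s = pressure b g s / ln (INR b).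
Proof.
  intros Hb. unfold dimfun, pressure, partition_sum. rewrite rsum_sum_f_R0.
  replace (S (b - 1)) with b by lia. reflexivity.
Qed.

Theorem theorem4p5 (b : nat) (g : nat -> R)
  (hb : (2 <= b)%nat)
  (hpos : forall i, (i < b)%nat -> 0 < g i)
  (hgt : exists i, (i < b)%nat /\ 1 < g i)
  (hlt : exists i, (i < b)%nat /\ g i < 1) :
  exists s0, 0 <= s0 /\ (forall s, 0 <= s -> dimfun b g s0 <= dimfun b g s) /\
    hausdorff_dim (Xset b g) (dimfun b g s0).
Proof.
  destruct hlt as [j [Hj Hgj]].
  destruct (pressure_last_minimizer b g ltac:(lia) (ex_intro _ j (conj Hj (conj (hpos j Hj) Hgj))))
    as (s0 & Hs0 & Hmin & Hstr).
  assert (Hlb : 0 < ln (INR b)) by (rewrite <- ln_1; apply ln_increasing; [lra | apply lt_1_INR; lia]).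
  assert (HF0 : 0 <= pressure b g s0).
  { pose proof (pressure_ge_term b g s0 j Hj) as Hge.
    pose proof (ln_increasing (g j) 1 (hpos j Hj) Hgj) as Hln. rewrite ln_1 in Hln.
    pose proof (Rmult_le_pos s0 (- ln (g j)) Hs0 ltac:(lra)). lra. }
  exists s0. split; [auto|]. rewrite !dimfun_pressure by lia. split.
  - intros s Hs. rewrite dimfun_pressure by lia.
    apply Rmult_le_compat_r; [left; apply Rinv_0_lt_compat | apply Hmin]; auto.
  - apply hausdorff_dim_of_threshold; auto.
    + intros t Ht. apply (Hnull_Xset b g ltac:(lia) hpos t s0 Hs0); [nra | auto].
    + intros t Ht0 Ht.
      destruct (many_light_words b g s0 ltac:(lia) hpos Hs0 Hmin Hstr t Ht0 Ht)
        as (m & W & th & Hm & Hth & Hnd & HW & HlW & Hbeta).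
      exact (not_Hnull_of_light_words b g m W th t ltac:(lia) hpos Hm Hth Hnd HW HlW Ht0 Hbeta).
Qed.
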